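(* Let $\langle k\rangle,\langle k^2\rangle,\langle k^3\rangle$ be the first three moments of a degree distribution on the nonnegative integers, with $\langle k\rangle>0$, $\langle k^2\rangle-\langle k\rangle^2>0$ and $\langle k^2\rangle>\langle k\rangle$. Define $$\alpha=\frac{\langle k^2\rangle^2-\langle k\rangle\langle k^3\rangle}{\langle k^2\rangle-\langle k\rangle^2},\qquad \beta=\frac{\langle k^3\rangle-\langle k^2\rangle\langle k\rangle}{\langle k^2\rangle-\langle k\rangle^2}-1,$$ and for a parameter $\delta>0$ consider the system of ODEs \begin{align*} \dot w&=\langle k\rangle\delta x-w,\\ \dot x&=z-(\delta+1)x+\frac{\alpha\delta}{\langle k\rangle}\cdot\frac{(1-w)x(1-3x-z)}{(1-x-z)^2}+\beta\delta\cdot\frac{x(1-3x-z)}{1-x-z},\\ \dot z&=-2z+2\delta x+\frac{2\alpha\delta}{\langle k\rangle}\cdot\frac{(1-w)x^2}{(1-x-z)^2}+2\beta\delta\cdot\frac{x^2}{1-x-z}. \end{align*} Let $\delta_c=\dfrac{\langle k\rangle}{\langle k^2\rangle-\langle k\rangle}$. Then the disease-free equilibrium $(w,x,z)=(0,0,0)$ is locally asymptotically stable if $\delta<\delta_c$ and unstable if $\delta>\delta_c$.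
   Context: This is the nondimensionalized super compact pairwise (SCPW) SIS epidemic model on a network: $w$ is the proportion of infectious nodes, $x$, $z$ are the proportions of susceptible–infectious and infectious–infectious links, and $\delta=\tau/\gamma$ is the ratio of transmission rate to recovery rate. The model arises with the conservation laws $v+w=1$ and $2x+y+z=1$ ($v$ the susceptible proportion, $y$ the susceptible–susceptible link proportion), which have been used to eliminate $v$ and $y$. Stability refers to local stability of the equilibrium of the ODE system. *)

From Stdlib Require Import Reals.
From Coquelicot Require Import Coquelicot.
Open Scope R_scope.

Definition degree_moments (p : nat -> R) (k1 k2 k3 : R) : Prop :=
  (forall n, 0 <= p n) /\ is_series p 1 /\
  is_series (fun n => INR n * p n) k1 /\
  is_series (fun n => INR n ^ 2 * p n) k2 /\
  is_series (fun n => INR n ^ 3 * p n) k3.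

Definition alpha (k1 k2 k3 : R) : R := (k2 ^ 2 - k1 * k3) / (k2 - k1 ^ 2).
Definition beta (k1 k2 k3 : R) : R := (k3 - k2 * k1) / (k2 - k1 ^ 2) - 1.
Definition delta_c (k1 k2 : R) : R := k1 / (k2 - k1).

Definition Fw (k1 k2 k3 d w x z : R) : R := k1 * d * x - w.
Definition Fx (k1 k2 k3 d w x z : R) : R :=
  z - (d + 1) * x
  + alpha k1 k2 k3 * d / k1 * ((1 - w) * x * (1 - 3 * x - z) / (1 - x - z) ^ 2)
  + beta k1 k2 k3 * d * (x * (1 - 3 * x - z) / (1 - x - z)).
Definition Fz (k1 k2 k3 d w x z : R) : R :=
  - 2 * z + 2 * d * x
  + 2 * alpha k1 k2 k3 * d / k1 * ((1 - w) * x ^ 2 / (1 - x - z) ^ 2)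
  + 2 * beta k1 k2 k3 * d * (x ^ 2 / (1 - x - z)).

Definition is_solution (k1 k2 k3 d : R) (T : Rbar) (w x z : R -> R) : Prop :=
  Rbar_lt 0 T /\
  (forall t, 0 <= t -> Rbar_lt t T -> 1 - x t - z t <> 0) /\
  filterlim w (at_right 0) (locally (w 0)) /\
  filterlim x (at_right 0) (locally (x 0)) /\
  filterlim z (at_right 0) (locally (z 0)) /\
  (forall t, 0 < t -> Rbar_lt t T ->
     is_derive w t (Fw k1 k2 k3 d (w t) (x t) (z t)) /\
     is_derive x t (Fx k1 k2 k3 d (w t) (x t) (z t)) /\
     is_derive z t (Fz k1 k2 k3 d (w t) (x t) (z t))).

Definition nrm3 (a b c : R) : R := Rmax (Rabs a) (Rmax (Rabs b) (Rabs c)).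

Definition dfe_stable (k1 k2 k3 d : R) : Prop :=
  forall eps, 0 < eps -> exists eta, 0 < eta /\
    forall w0 x0 z0, nrm3 w0 x0 z0 < eta ->
      (exists w x z, is_solution k1 k2 k3 d p_infty w x z /\
                     w 0 = w0 /\ x 0 = x0 /\ z 0 = z0) /\
      (forall T w x z, is_solution k1 k2 k3 d T w x z ->
         w 0 = w0 -> x 0 = x0 -> z 0 = z0 ->
         forall t, 0 <= t -> Rbar_lt t T -> nrm3 (w t) (x t) (z t) < eps).

Definition dfe_attractive (k1 k2 k3 d : R) : Prop :=
  exists eta, 0 < eta /\
    forall w x z, is_solution k1 k2 k3 d p_infty w x z ->
      nrm3 (w 0) (x 0) (z 0) < eta ->
      is_lim w p_infty 0 /\ is_lim x p_infty 0 /\ is_lim z p_infty 0.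

Definition dfe_LAS (k1 k2 k3 d : R) : Prop :=
  dfe_stable k1 k2 k3 d /\ dfe_attractive k1 k2 k3 d.

Definition dfe_unstable (k1 k2 k3 d : R) : Prop := ~ dfe_stable k1 k2 k3 d.

(* With A = alpha d / k1 and B = beta d one has
   A + B - 1 = (d - delta_c) (k2 - k1) / k1.  Near the origin
   x' = z + (A + B - d - 1) x + O(|(w,x,z)|) x and z' = 2 d x - 2 z + O(x^2),
   so w enters the (x, z) equations only at second order and the (x, z) block
   of the linearization has determinant 2 (1 - A - B).

   If A + B < 1, the quadratic form eps w^2 + 2 d x^2 + z^2 (eps small) decays
   at a rate proportional to itself on a small box.  This gives Lyapunov
   stability and, after integration, convergence to 0.  Solutions starting
   near 0 are obtained by Picard iteration for the field clamped to a box,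
   which is globally Lipschitz; the Lyapunov function keeps them inside the
   box, where they solve the true system.

   If A + B > 1 the block is a saddle with eigenvalues lp > 0 > lm.  In the
   eigen-coordinates yl = (l + 2) x + z the Chetaev function yp^2 - ym^2 grows
   at least linearly along every solution that starts on ym = 0 and stays in
   a small box, which is incompatible with stability. *)

From Stdlib Require Import Reals Lra Lia Classical.
From Coquelicot Require Import Coquelicot.
Open Scope R_scope.

Definition in_box (r a b c : R) := Rabs a <= r /\ Rabs b <= r /\ Rabs c <= r.

Lemma nrm3_ge_1 a b c : Rabs a <= nrm3 a b c.
Proof. unfold nrm3; apply Rmax_l. Qed.

Lemma nrm3_ge_2 a b c : Rabs b <= nrm3 a b c.
Proof. unfold nrm3; eapply Rle_trans; [|apply Rmax_r]; apply Rmax_l. Qed.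

Lemma nrm3_ge_3 a b c : Rabs c <= nrm3 a b c.
Proof. unfold nrm3; eapply Rle_trans; [|apply Rmax_r]; apply Rmax_r. Qed.

Lemma nrm3_ge0 a b c : 0 <= nrm3 a b c.
Proof. eapply Rle_trans; [apply Rabs_pos|apply nrm3_ge_1]. Qed.

Lemma nrm3_le a b c m : Rabs a <= m -> Rabs b <= m -> Rabs c <= m -> nrm3 a b c <= m.
Proof. intros; unfold nrm3; repeat apply Rmax_lub; auto. Qed.

Lemma nrm3_lt a b c m : Rabs a < m -> Rabs b < m -> Rabs c < m -> nrm3 a b c < m.
Proof. intros; unfold nrm3; repeat apply Rmax_lub_lt; auto. Qed.

Lemma in_box_nrm3 r a b c : nrm3 a b c < r -> in_box r a b c.
Proof.
  intros H. pose proof (nrm3_ge_1 a b c). pose proof (nrm3_ge_2 a b c).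
  pose proof (nrm3_ge_3 a b c). repeat split; lra.
Qed.

Lemma sqr_le_of_Rabs_le v m : Rabs v <= m -> v ^ 2 <= m ^ 2.
Proof. intros H. rewrite <- (pow2_abs v). apply pow_incr. split; auto. apply Rabs_pos. Qed.

Lemma continuous_lipschitz3 (g : R -> R -> R -> R) (L : R) (f1 f2 f3 : R -> R) (t : R) :
  0 <= L ->
  (forall a b c a' b' c', Rabs (g a b c - g a' b' c') <= L * nrm3 (a-a') (b-b') (c-c')) ->
  continuous f1 t -> continuous f2 t -> continuous f3 t ->
  continuous (fun s => g (f1 s) (f2 s) (f3 s)) t.
Proof.
  intros HL Hg H1 H2 H3. apply filterlim_locally. intros eps.
  assert (He : 0 < eps / (L + 1)) by (apply Rdiv_lt_0_compat; [apply cond_pos|lra]).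
  set (e := mkposreal _ He).
  apply (proj1 (filterlim_locally _ _)) with (eps := e) in H1, H2, H3.
  generalize (filter_and _ _ H1 (filter_and _ _ H2 H3)). apply filter_imp.
  intros s [B1 [B2 B3]].
  change (Rabs (g (f1 s) (f2 s) (f3 s) - g (f1 t) (f2 t) (f3 t)) < eps).
  assert (Hn : nrm3 (f1 s - f1 t) (f2 s - f2 t) (f3 s - f3 t) < e) by (apply nrm3_lt; auto).
  pose proof (nrm3_ge0 (f1 s - f1 t) (f2 s - f2 t) (f3 s - f3 t)).
  pose proof (cond_pos eps).
  eapply Rle_lt_trans; [apply Hg|]. simpl in Hn.
  apply Rle_lt_trans with (L * (eps / (L + 1))); [apply Rmult_le_compat_l; lra|].
  apply Rmult_lt_reg_r with (L + 1); [lra|].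
  replace (L * (eps / (L + 1)) * (L + 1)) with (L * eps) by (field; lra). nra.
Qed.

Lemma continuous_lipschitz (f : R -> R) (L t : R) :
  0 <= L -> (forall a b, Rabs (f a - f b) <= L * Rabs (a - b)) -> continuous f t.
Proof.
  intros HL Hf.
  apply (continuous_lipschitz3 (fun a _ _ => f a) L id id id); auto;
    try apply continuous_id.
  intros. eapply Rle_trans; [apply Hf|]. apply Rmult_le_compat_l; auto. apply nrm3_ge_1.
Qed.

Lemma is_lim_seq_Rabs_le (u : nat -> R) (l c B : R) :
  is_lim_seq u l -> (forall k, Rabs (u k - c) <= B) -> Rabs (l - c) <= B.
Proof.
  intros Hu HB.
  assert (H : is_lim_seq (fun k => Rabs (u k - c)) (Rabs (l - c))).
  { apply (is_lim_seq_abs (fun k => u k - c) (l - c)).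
    apply is_lim_seq_minus'; auto. apply is_lim_seq_const. }
  exact (is_lim_seq_le _ _ _ _ HB H (is_lim_seq_const B)).
Qed.

Lemma Rabs_le_all_eq0 x : (forall eps, 0 < eps -> Rabs x <= eps) -> x = 0.
Proof.
  intros H. destruct (Req_dec x 0) as [|Hx]; auto.
  pose proof (Rabs_pos_lt x Hx). specialize (H (Rabs x / 2) ltac:(lra)). lra.
Qed.

Lemma ex_RInt_continuous_R (f : R -> R) a b : (forall t, continuous f t) -> ex_RInt f a b.
Proof. intros Hf. apply (@ex_RInt_continuous R_CompleteNormedModule). intros; apply Hf. Qed.

Lemma is_derive_RInt_from_0 (f : R -> R) t : (forall t, continuous f t) -> is_derive (RInt f 0) t (f t).
Proof.
  intros Hf. apply is_derive_RInt with 0; [|apply Hf].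
  exists (mkposreal 1 Rlt_0_1). intros. apply RInt_correct. apply ex_RInt_continuous_R; auto.
Qed.

Lemma is_derive_continuous_R (f : R -> R) t l : is_derive f t l -> continuous f t.
Proof. intros H. apply (@ex_derive_continuous R_AbsRing R_NormedModule). exists l; auto. Qed.

(** * Global existence for Lipschitz bounded fields (Picard iteration) *)

Section Picard.

Variables (G : nat -> R -> R -> R -> R) (init : nat -> R) (L M : R).
Hypotheses (L_pos : 0 < L) (M_ge0 : 0 <= M)
  (G_lipschitz : forall i a b c a' b' c',
     Rabs (G i a b c - G i a' b' c') <= L * nrm3 (a - a') (b - b') (c - c'))
  (G_bounded : forall i a b c, Rabs (G i a b c) <= M).

Definition field_along (f : nat -> R -> R) (i : nat) (s : R) : R :=
  G i (f 0%nat s) (f 1%nat s) (f 2%nat s).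

Fixpoint picard_iter (n : nat) : nat -> R -> R :=
  match n with
  | O => fun i _ => init i
  | S m => fun i t => init i + RInt (field_along (picard_iter m) i) 0 t
  end.

Lemma continuous_field_along f :
  (forall i t, continuous (f i) t) -> forall i t, continuous (field_along f i) t.
Proof.
  intros Hf i t. apply continuous_lipschitz3 with L; auto; lra.
Qed.

Lemma continuous_picard_iter n : forall i t, continuous (picard_iter n i) t.
Proof.
  induction n as [|n IH]; intros i t; simpl.
  - apply continuous_const.
  - apply (continuous_plus (fun _ => init i)); [apply continuous_const|].
    apply is_derive_continuous_R with (field_along (picard_iter n) i t).
    apply is_derive_RInt_from_0. apply continuous_field_along; auto.
Qed.

Lemma picard_iter_0 n i : picard_iter n i 0 = init i.
Proof. destruct n; simpl; auto. rewrite RInt_point. unfold zero; simpl. ring. Qed.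

Definition picard_major (n : nat) (t : R) : R :=
  M * L ^ n * t ^ (S n) / INR (Factorial.fact (S n)).

Lemma picard_major_ge0 n t : 0 <= t -> 0 <= picard_major n t.
Proof.
  intros Ht. unfold picard_major. apply Rmult_le_pos.
  - apply Rmult_le_pos; [apply Rmult_le_pos; auto; apply pow_le; lra|apply pow_le; auto].
  - left; apply Rinv_0_lt_compat, INR_fact_lt_0.
Qed.

Lemma picard_major_le n t T : 0 <= t <= T -> picard_major n t <= picard_major n T.
Proof.
  intros Ht. unfold picard_major.
  apply Rmult_le_compat_r; [left; apply Rinv_0_lt_compat, INR_fact_lt_0|].
  apply Rmult_le_compat_l; [apply Rmult_le_pos; auto; apply pow_le; lra|].
  apply pow_incr; lra.
Qed.

Lemma picard_major_S n T :
  picard_major (S n) T = picard_major n T * (L * T / INR (S (S n))).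
Proof.
  unfold picard_major. rewrite (fact_simpl (S n)), mult_INR.
  assert (H1 := INR_fact_neq_0 (S n)).
  assert (H2 : INR (S (S n)) <> 0) by (apply not_0_INR; lia).
  simpl pow. field. auto.
Qed.

Lemma RInt_picard_major n t :
  RInt (fun s => L * picard_major n s) 0 t = picard_major (S n) t.
Proof.
  assert (D : forall s, is_derive (picard_major (S n)) s (L * picard_major n s)).
  { intros s. set (c := M * L ^ (S n) / INR (Factorial.fact (S (S n)))).
    apply is_derive_ext with (fun s => c * s ^ (S (S n))).
    { intros u. unfold picard_major, c. simpl. unfold Rdiv. ring. }
    replace (L * picard_major n s) with (c * (INR (S (S n)) * 1 * s ^ Init.Nat.pred (S (S n)))).
    - apply is_derive_scal, is_derive_pow, (@is_derive_id R_AbsRing).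
    - unfold c, picard_major. rewrite (fact_simpl (S n)), mult_INR.
      assert (H1 := INR_fact_neq_0 (S n)).
      assert (H2 : INR (S (S n)) <> 0) by (apply not_0_INR; lia).
      simpl Init.Nat.pred. simpl pow. field. auto. }
  apply is_RInt_unique.
  replace (picard_major (S n) t) with (minus (picard_major (S n) t) (picard_major (S n) 0)).
  - apply (@is_RInt_derive R_CompleteNormedModule); [intros; apply D|].
    intros. apply (@ex_derive_continuous R_AbsRing R_NormedModule).
    unfold picard_major. auto_derive. auto.
  - unfold picard_major at 2. rewrite pow_i by lia. unfold minus, plus, opp; simpl.
    unfold Rdiv. ring.
Qed.

Lemma picard_iter_step n : forall i t, 0 <= t ->
  Rabs (picard_iter (S n) i t - picard_iter n i t) <= picard_major n t.
Proof.
  induction n as [|n IH]; intros i t Ht.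
  - simpl. rewrite (Rplus_comm (init i)). unfold Rminus.
    rewrite Rplus_assoc, Rplus_opp_r, Rplus_0_r.
    eapply Rle_trans.
    + apply abs_RInt_le_const; auto.
      * apply ex_RInt_continuous_R. intros; apply continuous_field_along.
        intros; apply continuous_const.
      * intros; apply G_bounded.
    + unfold picard_major; simpl. right; field.
  - set (f1 := field_along (picard_iter (S n)) i).
    set (f0 := field_along (picard_iter n) i).
    assert (C1 : forall s, continuous f1 s)
      by (apply continuous_field_along, continuous_picard_iter).
    assert (C0 : forall s, continuous f0 s)
      by (apply continuous_field_along, continuous_picard_iter).
    change (Rabs (init i + RInt f1 0 t - (init i + RInt f0 0 t)) <= picard_major (S n) t).
    replace (init i + RInt f1 0 t - (init i + RInt f0 0 t))
      with (RInt (fun s => f1 s - f0 s) 0 t)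
      by (rewrite (RInt_minus f1 f0) by (apply ex_RInt_continuous_R; auto);
          unfold minus, plus, opp; simpl; ring).
    assert (Cd : forall s, continuous (fun s => f1 s - f0 s) s)
      by (intros s; apply (continuous_minus f1 f0); auto).
    eapply Rle_trans; [apply abs_RInt_le; auto; apply ex_RInt_continuous_R; auto|].
    rewrite <- RInt_picard_major. apply RInt_le; auto.
    + apply ex_RInt_continuous_R. intros; apply continuous_Rabs_comp; auto.
    + apply ex_RInt_continuous_R. intros. apply (@ex_derive_continuous R_AbsRing R_NormedModule).
      unfold picard_major. auto_derive. auto.
    + intros s Hs. unfold f1, f0, field_along. eapply Rle_trans; [apply G_lipschitz|].
      apply Rmult_le_compat_l; [lra|]. apply nrm3_le; apply IH; lra.
Qed.

Lemma picard_major_halves T : 0 <= T ->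
  exists N, forall n, (N <= n)%nat -> picard_major (S n) T <= picard_major n T / 2.
Proof.
  intros HT. destruct (INR_archimed 1 (2 * L * T)) as [N HN]; [lra|].
  exists N. intros n Hn. apply le_INR in Hn. rewrite picard_major_S.
  pose proof (picard_major_ge0 n T HT). pose proof (pos_INR n).
  assert (H2 : INR (S (S n)) = INR n + 2) by (rewrite !S_INR; ring).
  assert (L * T / INR (S (S n)) <= / 2).
  { rewrite H2. apply Rmult_le_reg_r with (INR n + 2); [lra|].
    unfold Rdiv. rewrite Rmult_assoc, Rinv_l by lra. lra. }
  unfold Rdiv at 2. apply Rmult_le_compat_l; auto.
Qed.

Lemma picard_major_geometric T N : 0 <= T ->
  (forall n, (N <= n)%nat -> picard_major (S n) T <= picard_major n T / 2) ->
  forall n k, (N <= n)%nat -> picard_major (n + k) T <= picard_major n T * (/ 2) ^ k.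
Proof.
  intros HT HN n k Hn. induction k as [|k IH].
  - rewrite Nat.add_0_r. simpl. lra.
  - rewrite Nat.add_succ_r. pose proof (HN (n + k)%nat ltac:(lia)). simpl. lra.
Qed.

Lemma picard_iter_close T N : 0 <= T ->
  (forall n, (N <= n)%nat -> picard_major (S n) T <= picard_major n T / 2) ->
  forall n m i t, (N <= n <= m)%nat -> 0 <= t <= T ->
  Rabs (picard_iter m i t - picard_iter n i t) <= 2 * picard_major n T.
Proof.
  intros HT HN n m i t Hnm Ht.
  assert (Hk : forall k, Rabs (picard_iter (n + k) i t - picard_iter n i t)
                        <= 2 * picard_major n T * (1 - (/ 2) ^ k)).
  { induction k as [|k IH].
    - rewrite Nat.add_0_r, Rminus_diag, Rabs_R0. simpl. lra.
    - rewrite Nat.add_succ_r.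
      pose proof (picard_iter_step (n + k) i t ltac:(lra)).
      pose proof (picard_major_le (n + k) t T Ht).
      pose proof (picard_major_geometric T N HT HN n k ltac:(lia)).
      replace (picard_iter (S (n + k)) i t - picard_iter n i t) with
        ((picard_iter (S (n + k)) i t - picard_iter (n + k) i t)
         + (picard_iter (n + k) i t - picard_iter n i t)) by ring.
      eapply Rle_trans; [apply Rabs_triang|]. simpl pow. lra. }
  replace m with (n + (m - n))%nat by lia.
  eapply Rle_trans; [apply Hk|].
  pose proof (picard_major_ge0 n T HT). pose proof (pow_le (/ 2) (m - n) ltac:(lra)). nra.
Qed.

Lemma picard_major_small T N : 0 <= T ->
  (forall n, (N <= n)%nat -> picard_major (S n) T <= picard_major n T / 2) ->
  forall eps, 0 < eps -> exists N1, (N <= N1)%nat /\ picard_major N1 T <= eps.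
Proof.
  intros HT HN eps He. pose proof (picard_major_ge0 N T HT) as P.
  destruct (pow_lt_1_zero (/ 2) ltac:(rewrite Rabs_pos_eq; lra) (eps / (picard_major N T + 1)))
    as [K HK]; [apply Rdiv_lt_0_compat; lra|].
  exists (N + K)%nat. split; [lia|].
  eapply Rle_trans; [apply (picard_major_geometric T N HT HN); lia|].
  specialize (HK K (le_n K)). rewrite Rabs_pos_eq in HK by (apply pow_le; lra).
  pose proof (pow_le (/ 2) K ltac:(lra)).
  apply Rle_trans with ((picard_major N T + 1) * (eps / (picard_major N T + 1))); [nra|].
  right. field. lra.
Qed.

Definition picard_sol (i : nat) (t : R) : R :=
  real (Lim_seq (fun n => picard_iter n i (Rmax 0 t))).

Lemma is_lim_seq_picard_sol i t : 0 <= t ->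
  is_lim_seq (fun n => picard_iter n i t) (picard_sol i t).
Proof.
  intros Ht. unfold picard_sol. rewrite Rmax_right by auto.
  apply Lim_seq_correct'. apply ex_lim_seq_cauchy_corr. intros eps.
  destruct (picard_major_halves t Ht) as [N HN].
  destruct (picard_major_small t N Ht HN (eps / 5)) as [N1 [HN1 HA]];
    [pose proof (cond_pos eps); lra|].
  exists N1. intros n m Hn Hm.
  pose proof (picard_iter_close t N Ht HN N1 n i t ltac:(lia) ltac:(lra)).
  pose proof (picard_iter_close t N Ht HN N1 m i t ltac:(lia) ltac:(lra)).
  pose proof (cond_pos eps).
  replace (picard_iter n i t - picard_iter m i t) with
    ((picard_iter n i t - picard_iter N1 i t) - (picard_iter m i t - picard_iter N1 i t)) by ring.
  eapply Rle_lt_trans; [apply Rabs_triang|]. rewrite Rabs_Ropp. lra.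
Qed.

Lemma picard_sol_close T N : 0 <= T ->
  (forall n, (N <= n)%nat -> picard_major (S n) T <= picard_major n T / 2) ->
  forall n i t, (N <= n)%nat -> 0 <= t <= T ->
  Rabs (picard_sol i t - picard_iter n i t) <= 2 * picard_major n T.
Proof.
  intros HT HN n i t Hn Ht.
  apply is_lim_seq_Rabs_le with (fun k => picard_iter (k + n) i t).
  - apply (is_lim_seq_incr_n (fun k => picard_iter k i t)). apply is_lim_seq_picard_sol; lra.
  - intros k. apply picard_iter_close with N; auto; lia.
Qed.

Lemma picard_sol_0 i : picard_sol i 0 = init i.
Proof.
  unfold picard_sol. rewrite Rmax_left by lra.
  rewrite (Lim_seq_ext _ (fun _ => init i)) by (intros; apply picard_iter_0).
  rewrite Lim_seq_const. reflexivity.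
Qed.

Lemma picard_iter_lipschitz n i t s :
  Rabs (picard_iter n i t - picard_iter n i s) <= M * Rabs (t - s).
Proof.
  assert (H : forall t s, s <= t ->
            Rabs (picard_iter n i t - picard_iter n i s) <= M * Rabs (t - s)).
  { intros t' s' Hst. destruct n as [|n]; simpl.
    - rewrite Rminus_diag, Rabs_R0. pose proof (Rabs_pos (t' - s')). nra.
    - set (f := field_along (picard_iter n) i).
      assert (Cf : forall u, continuous f u)
        by (apply continuous_field_along, continuous_picard_iter).
      rewrite <- (RInt_Chasles f 0 s' t') by (apply ex_RInt_continuous_R; auto).
      assert (E : forall a b c : R, a + plus b c - (a + b) = c)
        by (intros; unfold plus; simpl; ring).
      rewrite E.
      rewrite (Rabs_pos_eq (t' - s')) by lra. rewrite Rmult_comm.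
      apply abs_RInt_le_const; auto; [apply ex_RInt_continuous_R; auto|].
      intros; apply G_bounded. }
  destruct (Rle_dec s t); auto.
  rewrite Rabs_minus_sym, (Rabs_minus_sym t). apply H. lra.
Qed.

Lemma picard_sol_lipschitz i t s :
  Rabs (picard_sol i t - picard_sol i s) <= M * Rabs (t - s).
Proof.
  assert (E : forall u, picard_sol i u = picard_sol i (Rmax 0 u)).
  { intros u. unfold picard_sol. rewrite (Rmax_right 0 (Rmax 0 u)); auto. apply Rmax_l. }
  rewrite (E t), (E s).
  apply Rle_trans with (M * Rabs (Rmax 0 t - Rmax 0 s)).
  - replace (picard_sol i (Rmax 0 t) - picard_sol i (Rmax 0 s))
      with ((picard_sol i (Rmax 0 t) - picard_sol i (Rmax 0 s)) - 0) by ring.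
    apply is_lim_seq_Rabs_le
      with (fun n => picard_iter n i (Rmax 0 t) - picard_iter n i (Rmax 0 s)).
    + apply is_lim_seq_minus'; apply is_lim_seq_picard_sol; apply Rmax_l.
    + intros k. rewrite Rminus_0_r. apply picard_iter_lipschitz.
  - apply Rmult_le_compat_l; auto. unfold Rmax.
    destruct (Rle_dec 0 t), (Rle_dec 0 s); unfold Rabs; repeat destruct Rcase_abs; lra.
Qed.

Lemma continuous_picard_sol i t : continuous (picard_sol i) t.
Proof. apply continuous_lipschitz with M; auto. intros; apply picard_sol_lipschitz. Qed.

(* The uniform estimate [picard_sol_close] lets us pass to the limit under the integral. *)
Lemma picard_sol_integral i t : 0 <= t ->
  picard_sol i t = init i + RInt (field_along picard_sol i) 0 t.
Proof.
  intros Ht. set (Gs := field_along picard_sol i).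
  assert (CGs : forall u, continuous Gs u)
    by (apply continuous_field_along; intros; apply continuous_picard_sol).
  apply Rminus_diag_uniq, Rabs_le_all_eq0. intros eps He.
  destruct (picard_major_halves t Ht) as [N HN].
  set (e' := eps / (2 + 2 * t * L + 1)).
  assert (He' : 0 < e') by (unfold e'; apply Rdiv_lt_0_compat; nra).
  destruct (picard_major_small t N Ht HN e' He') as [N1 [HN1 HA]].
  set (fn := field_along (picard_iter N1) i).
  assert (Cfn : forall u, continuous fn u)
    by (apply continuous_field_along, continuous_picard_iter).
  assert (T1 : Rabs (picard_sol i t - picard_iter (S N1) i t) <= 2 * e').
  { pose proof (HN N1 HN1). pose proof (picard_major_ge0 N1 t Ht).
    eapply Rle_trans; [apply picard_sol_close with N; auto; lra|]. lra. }
  assert (T2 : Rabs (picard_iter (S N1) i t - (init i + RInt Gs 0 t)) <= t * (L * (2 * e'))).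
  { change (picard_iter (S N1) i t) with (init i + RInt fn 0 t).
    replace (init i + RInt fn 0 t - (init i + RInt Gs 0 t))
      with (RInt fn 0 t - RInt Gs 0 t) by ring.
    rewrite <- (RInt_minus fn Gs) by (apply ex_RInt_continuous_R; auto).
    replace (t * (L * (2 * e'))) with ((t - 0) * (L * (2 * e'))) by ring.
    apply abs_RInt_le_const; auto.
    - apply ex_RInt_continuous_R. intros u. apply (continuous_minus fn Gs); auto.
    - intros u Hu. unfold fn, Gs, field_along. eapply Rle_trans; [apply G_lipschitz|].
      apply Rmult_le_compat_l; [lra|].
      apply nrm3_le; rewrite Rabs_minus_sym;
        (eapply Rle_trans; [apply picard_sol_close with (T := t) (N := N); auto; lra|lra]). }
  replace (picard_sol i t - (init i + RInt Gs 0 t)) with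
    ((picard_sol i t - picard_iter (S N1) i t)
     + (picard_iter (S N1) i t - (init i + RInt Gs 0 t))) by ring.
  eapply Rle_trans; [apply Rabs_triang|].
  apply Rle_trans with (e' * (2 + 2 * t * L)); [lra|].
  unfold e'. apply Rle_trans with (eps / (2 + 2 * t * L + 1) * (2 + 2 * t * L + 1)).
  - apply Rmult_le_compat_l; [left; apply He'|lra].
  - right; field; nra.
Qed.

Lemma is_derive_picard_sol i t : 0 < t ->
  is_derive (picard_sol i) t (field_along picard_sol i t).
Proof.
  intros Ht. set (Gs := field_along picard_sol i).
  assert (CGs : forall u, continuous Gs u)
    by (apply continuous_field_along; intros; apply continuous_picard_sol).
  assert (D : is_derive (fun s => init i + RInt Gs 0 s) t (Gs t)).
  { pose proof (is_derive_plus _ _ _ _ _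
      (@is_derive_const R_AbsRing R_NormedModule (init i) t) (is_derive_RInt_from_0 Gs t CGs)) as P.
    simpl in P. unfold plus in P; simpl in P. rewrite Rplus_0_l in P. exact P. }
  apply is_derive_ext_loc with (2 := D).
  exists (mkposreal t Ht). intros s Hs. change (Rabs (s - t) < t) in Hs.
  symmetry. apply picard_sol_integral.
  unfold Rabs in Hs; destruct Rcase_abs in Hs; lra.
Qed.

End Picard.

Theorem picard_global_existence (G : nat -> R -> R -> R -> R) (init : nat -> R) (L M : R) :
  0 < L -> 0 <= M ->
  (forall i a b c a' b' c',
     Rabs (G i a b c - G i a' b' c') <= L * nrm3 (a - a') (b - b') (c - c')) ->
  (forall i a b c, Rabs (G i a b c) <= M) ->
  exists f : nat -> R -> R, (forall i, f i 0 = init i) /\ (forall i t, continuous (f i) t) /\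
    (forall i t, 0 < t -> is_derive (f i) t (G i (f 0%nat t) (f 1%nat t) (f 2%nat t))).
Proof.
  intros HL HM HG HB. exists (picard_sol G init).
  split; [|split]; intros.
  - apply picard_sol_0.
  - apply continuous_picard_sol with L M; auto.
  - apply is_derive_picard_sol with L M; auto.
Qed.

(** * Right continuity, derivatives and monotonicity *)

Definition rcont (f : R -> R) (a : R) := filterlim f (at_right a) (locally (f a)).

Lemma rcont_ext f g a : (forall t, f t = g t) -> rcont f a -> rcont g a.
Proof. intros E H. unfold rcont in *. rewrite <- E. apply filterlim_ext with f; auto. Qed.

Lemma rcont_const k a : rcont (fun _ => k) a.
Proof. apply filterlim_const. Qed.

Lemma rcont_of_continuous f a : continuous f a -> rcont f a.
Proof. intros H. apply (filterlim_filter_le_1 (F := locally a)); [apply filter_le_within|apply H]. Qed.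

Lemma rcont_id a : rcont (fun t => t) a.
Proof. apply rcont_of_continuous, continuous_id. Qed.

Lemma rcont_plus f g a : rcont f a -> rcont g a -> rcont (fun t => f t + g t) a.
Proof.
  intros Hf Hg.
  apply (filterlim_comp_2 (G := locally (f a)) (H := locally (g a)) f g Rplus); auto.
  apply (filterlim_plus (f a) (g a)).
Qed.

Lemma rcont_mult f g a : rcont f a -> rcont g a -> rcont (fun t => f t * g t) a.
Proof.
  intros Hf Hg.
  apply (filterlim_comp_2 (G := locally (f a)) (H := locally (g a)) f g Rmult); auto.
  apply (filterlim_mult (f a) (g a)).
Qed.

Lemma rcont_minus f g a : rcont f a -> rcont g a -> rcont (fun t => f t - g t) a.
Proof.
  intros Hf Hg. apply rcont_ext with (fun t => f t + (-1) * g t); [intros; ring|].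
  apply rcont_plus, rcont_mult; auto. apply rcont_const.
Qed.

Lemma rcont_pow f n a : rcont f a -> rcont (fun t => f t ^ n) a.
Proof. intros H. induction n; simpl; [apply rcont_const|apply rcont_mult; auto]. Qed.

Lemma rcont_eps f a : rcont f a ->
  forall eps, 0 < eps -> exists del, 0 < del /\ forall v, a < v < a + del -> Rabs (f v - f a) < eps.
Proof.
  intros H eps He. destruct (proj1 (filterlim_locally _ _) H (mkposreal eps He)) as [del Hd].
  exists del. split; [apply cond_pos|]. intros v Hv. apply Hd; [|lra].
  change (Rabs (v - a) < del). rewrite Rabs_pos_eq; lra.
Qed.

Lemma continuous_eps f x : continuous f x ->
  forall eps, 0 < eps -> exists del, 0 < del /\ forall v, Rabs (v - x) < del -> Rabs (f v - f x) < eps.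
Proof.
  intros H eps He. destruct (proj1 (filterlim_locally _ _) H (mkposreal eps He)) as [del Hd].
  exists del. split; [apply cond_pos|]. intros v Hv. apply Hd. exact Hv.
Qed.

Lemma continuous_le_of_left f s c : 0 < s -> continuous f s ->
  (forall u, 0 <= u < s -> f u <= c) -> f s <= c.
Proof.
  intros Hs Hc Hle. apply Rnot_lt_le. intros Hlt.
  destruct (continuous_eps f s Hc (f s - c) ltac:(lra)) as [del [Hd Hv]].
  set (u := Rmax (s - del / 2) (s / 2)).
  assert (Hu : s / 2 <= u /\ s - del / 2 <= u) by (split; [apply Rmax_r|apply Rmax_l]).
  assert (Hus : u < s) by (unfold u; apply Rmax_lub_lt; lra).
  assert (Hw : Rabs (f u - f s) < f s - c) by (apply Hv; rewrite Rabs_left; lra).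
  pose proof (Hle u ltac:(lra)). apply Rabs_def2 in Hw as [? ?]. lra.
Qed.

Lemma is_derive_eq_val (f : R -> R) (t a b : R) : is_derive f t a -> a = b -> is_derive f t b.
Proof. intros H ->; auto. Qed.

Lemma is_derive_plus_R (f g : R -> R) (t a b : R) :
  is_derive f t a -> is_derive g t b -> is_derive (fun s => f s + g s) t (a + b).
Proof. exact (is_derive_plus f g t a b). Qed.

Lemma is_derive_minus_R (f g : R -> R) (t a b : R) :
  is_derive f t a -> is_derive g t b -> is_derive (fun s => f s - g s) t (a - b).
Proof. exact (is_derive_minus f g t a b). Qed.

Lemma is_derive_mult_R (f g : R -> R) (t a b : R) : is_derive f t a -> is_derive g t b ->
  is_derive (fun s => f s * g s) t (a * g t + f t * b).
Proof. intros H1 H2. exact (is_derive_mult f g t a b H1 H2 Rmult_comm). Qed.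

Lemma is_derive_scal_R (k : R) (f : R -> R) (t a : R) :
  is_derive f t a -> is_derive (fun s => k * f s) t (k * a).
Proof. exact (is_derive_scal f t k a). Qed.

Lemma is_derive_sqr_R (f : R -> R) (t a : R) : is_derive f t a -> is_derive (fun s => f s ^ 2) t (2 * f t * a).
Proof.
  intros H. eapply is_derive_eq_val; [exact (is_derive_pow f 2 t a H)|]. simpl. ring.
Qed.

Lemma is_derive_affine (A B t : R) : is_derive (fun s => A + B * s) t B.
Proof.
  eapply is_derive_eq_val.
  - apply is_derive_plus_R; [apply (@is_derive_const R_AbsRing R_NormedModule)|].
    apply is_derive_scal_R, (@is_derive_id R_AbsRing).
  - simpl. unfold one, zero. simpl. ring.
Qed.

Lemma le_of_derive_nonpos_mvt (f df : R -> R) (a v t : R) (T : Rbar) :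
  (forall s, a < s -> Rbar_lt s T -> is_derive f s (df s) /\ df s <= 0) ->
  a < v <= t -> Rbar_lt t T -> f t <= f v.
Proof.
  intros H Hv Ht. destruct (Req_dec v t) as [->|Hvt]; [lra|].
  assert (HD : forall s, v <= s <= t -> is_derive f s (df s) /\ df s <= 0)
    by (intros s Hs; apply H; [lra|apply Rbar_le_lt_trans with t; [simpl; lra|auto]]).
  destruct (MVT_gen f v t df) as [c [Hc E]].
  - intros x Hx. rewrite Rmin_left, Rmax_right in Hx by lra. apply HD; lra.
  - intros x Hx. rewrite Rmin_left, Rmax_right in Hx by lra.
    apply continuity_pt_filterlim, is_derive_continuous_R with (df x), HD; lra.
  - rewrite Rmin_left, Rmax_right in Hc by lra. destruct (HD c ltac:(lra)) as [_ Hd].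
    assert (df c * (t - v) <= 0) by (apply Rmult_le_0_r; lra). lra.
Qed.

Lemma le_of_derive_nonpos (f df : R -> R) (a : R) (T : Rbar) : rcont f a ->
  (forall s, a < s -> Rbar_lt s T -> is_derive f s (df s) /\ df s <= 0) ->
  forall t, a <= t -> Rbar_lt t T -> f t <= f a.
Proof.
  intros Hr H t Ht HT. destruct (Req_dec t a) as [->|Hta]; [lra|].
  apply Rnot_lt_le. intros Hlt.
  destruct (rcont_eps f a Hr (f t - f a) ltac:(lra)) as [del [Hd Hv]].
  set (v := a + Rmin del (t - a) / 2).
  assert (Hm : 0 < Rmin del (t - a)) by (apply Rmin_glb_lt; lra).
  pose proof (Rmin_l del (t - a)). pose proof (Rmin_r del (t - a)).
  pose proof (Hv v ltac:(unfold v; lra)) as Hw.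
  pose proof (le_of_derive_nonpos_mvt f df a v t T H ltac:(unfold v; lra) HT).
  apply Rabs_def2 in Hw as [? ?]. lra.
Qed.

Lemma real_induction (P : R -> Prop) (t : R) :
  P 0 ->
  (forall s, 0 < s <= t -> (forall u, 0 <= u < s -> P u) -> P s) ->
  (forall s, 0 <= s < t -> (forall u, 0 <= u <= s -> P u) ->
     exists e, 0 < e /\ forall u, s < u < s + e -> P u) ->
  forall u, 0 <= u <= t -> P u.
Proof.
  intros H0 Hclosed Hstep u Hu.
  set (S := fun s => 0 <= s <= t /\ forall u, 0 <= u <= s -> P u).
  assert (S0 : S 0) by (split; [lra|intros v Hv; replace v with 0 by lra; auto]).
  destruct (completeness S) as [sig [Hub Hlub]].
  - exists t. intros s [Hs _]. lra.
  - exists 0. exact S0.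
  - assert (Hs0 : 0 <= sig) by (apply Hub; auto).
    assert (Hst : sig <= t) by (apply Hlub; intros s [Hs _]; lra).
    assert (Below : forall v, 0 <= v < sig -> P v).
    { intros v Hv. destruct (classic (exists s, S s /\ v < s)) as [[s [[_ Hs] Hvs]]|Hn].
      - apply Hs; lra.
      - assert (Hv' : is_upper_bound S v).
        { intros s Hs. apply Rnot_lt_le. intros Hlt. apply Hn. eauto. }
        specialize (Hlub v Hv'). lra. }
    assert (Ssig : S sig).
    { split; [lra|]. intros v Hv. destruct (Rlt_le_dec v sig); [apply Below; lra|].
      replace v with sig by lra.
      destruct (Req_dec sig 0) as [->|Hsig]; [auto|apply Hclosed; [lra|auto]]. }
    assert (Ht : sig = t).
    { destruct (Req_dec sig t) as [|Hne]; auto. exfalso.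
      destruct (Hstep sig ltac:(lra) (proj2 Ssig)) as [e [He Hv]].
      set (s' := Rmin (sig + e / 2) t).
      assert (Hs' : s' <= sig + e / 2 /\ s' <= t) by (split; [apply Rmin_l|apply Rmin_r]).
      assert (Hs2 : sig < s') by (unfold s'; apply Rmin_glb_lt; lra).
      assert (S s').
      { split; [lra|]. intros v Hv'. destruct (Rle_lt_dec v sig).
        - apply (proj2 Ssig); lra.
        - apply Hv; lra. }
      specialize (Hub s' ltac:(assumption)). lra. }
    apply (proj2 Ssig). lra.
Qed.

Lemma barrier_le (V dV : R -> R) (T : Rbar) rho :
  rcont V 0 -> V 0 < rho ->
  (forall t, 0 < t -> Rbar_lt t T -> is_derive V t (dV t)) ->
  (forall t, 0 < t -> Rbar_lt t T -> V t < rho -> dV t <= 0) ->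
  forall t, 0 <= t -> Rbar_lt t T -> V t <= V 0.
Proof.
  intros Hr H0 HD Hneg t Ht HT.
  assert (Cont : forall s, 0 < s <= t -> continuous V s)
    by (intros s Hs; apply is_derive_continuous_R with (dV s), HD;
        [lra|apply Rbar_le_lt_trans with t; [simpl; lra|auto]]).
  apply (real_induction (fun u => V u <= V 0) t); [lra| | |lra].
  - intros s Hs Hle. apply continuous_le_of_left; [lra|apply Cont; lra|auto].
  - intros s Hs Hle. pose proof (Hle s ltac:(lra)) as Hs0.
    assert (Hrs : rcont V s).
    { destruct (Req_dec s 0) as [->|]; auto. apply rcont_of_continuous, Cont. lra. }
    destruct (rcont_eps V s Hrs (rho - V s) ltac:(lra)) as [del [Hd Hv]].
    exists (Rmin del (t - s)). split; [apply Rmin_glb_lt; lra|].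
    intros u Hu. pose proof (Rmin_l del (t - s)). pose proof (Rmin_r del (t - s)).
    apply Rle_trans with (V s); auto.
    apply (le_of_derive_nonpos V dV s (Finite (s + Rmin del (t - s)))); auto;
      [|lra|simpl; lra].
    intros v Hv1 Hv2. simpl in Hv2.
    assert (HvT : Rbar_lt v T) by (apply Rbar_le_lt_trans with t; [simpl; lra|auto]).
    split; [apply HD; auto; lra|apply Hneg; auto; [lra|]].
    pose proof (Hv v ltac:(lra)) as Hw. apply Rabs_def2 in Hw as [? ?]. lra.
Qed.

(** * The vector field near the disease-free equilibrium *)

Definition fw (c1 w x z : R) := c1 * x - w.
Definition fx (d A B w x z : R) :=
  z - (d + 1) * x + A * ((1 - w) * x * (1 - 3 * x - z) / (1 - x - z) ^ 2)
  + B * (x * (1 - 3 * x - z) / (1 - x - z)).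
Definition fz (d A B w x z : R) :=
  - 2 * z + 2 * d * x + 2 * A * ((1 - w) * x ^ 2 / (1 - x - z) ^ 2)
  + 2 * B * (x ^ 2 / (1 - x - z)).

Lemma Fw_fw k1 k2 k3 d w x z : Fw k1 k2 k3 d w x z = fw (k1 * d) w x z.
Proof. unfold Fw, fw. ring. Qed.

Lemma Fx_fx k1 k2 k3 d w x z :
  Fx k1 k2 k3 d w x z = fx d (alpha k1 k2 k3 * d / k1) (beta k1 k2 k3 * d) w x z.
Proof. reflexivity. Qed.

Lemma Fz_fz k1 k2 k3 d w x z :
  Fz k1 k2 k3 d w x z = fz d (alpha k1 k2 k3 * d / k1) (beta k1 k2 k3 * d) w x z.
Proof. unfold Fz, fz, Rdiv. ring. Qed.

Lemma alpha_beta_sub1 k1 k2 k3 d : 0 < k1 -> 0 < k2 - k1 ^ 2 -> k1 < k2 ->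
  alpha k1 k2 k3 * d / k1 + beta k1 k2 k3 * d - 1 = (d - delta_c k1 k2) * (k2 - k1) / k1.
Proof. intros. unfold alpha, beta, delta_c. field. lra. Qed.

Definition num_x (w x z : R) := - x + z - w + 3 * w * x + w * z - x ^ 2 - 2 * x * z - z ^ 2.
Definition rem_x A B w x z := A * num_x w x z / (1 - x - z) ^ 2 - 2 * B * x / (1 - x - z).
Definition rem_z A B w x z := 2 * A * (1 - w) / (1 - x - z) ^ 2 + 2 * B / (1 - x - z).

Lemma fx_normal d A B w x z : 1 - x - z <> 0 ->
  fx d A B w x z = z + (-(d + 1) + A + B) * x + x * rem_x A B w x z.
Proof. intros H. unfold fx, rem_x, num_x. field. auto. Qed.

Lemma fz_normal d A B w x z : 1 - x - z <> 0 ->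
  fz d A B w x z = 2 * d * x - 2 * z + x ^ 2 * rem_z A B w x z.
Proof. intros H. unfold fz, rem_z. field. auto. Qed.

Definition Kx A B := 20 * Rabs A + 4 * Rabs B.
Definition Kz A B := 10 * Rabs A + 4 * Rabs B.

Lemma Kx_ge0 A B : 0 <= Kx A B.
Proof. unfold Kx. pose proof (Rabs_pos A). pose proof (Rabs_pos B). lra. Qed.

Lemma Kz_ge0 A B : 0 <= Kz A B.
Proof. unfold Kz. pose proof (Rabs_pos A). pose proof (Rabs_pos B). lra. Qed.

Lemma denom_inv_bounds x z : Rabs x <= 1/4 -> Rabs z <= 1/4 ->
  0 < / (1 - x - z) <= 2 /\ 0 < / (1 - x - z) ^ 2 <= 4.
Proof.
  intros Hx Hz. apply Rabs_le_between in Hx, Hz.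
  assert (HD : 1/2 <= 1 - x - z) by lra.
  split; split.
  - apply Rinv_0_lt_compat; lra.
  - replace 2 with (/ (/ 2)) by field. apply Rinv_le_contravar; lra.
  - apply Rinv_0_lt_compat; nra.
  - replace 4 with (/ (/ 4)) by field. apply Rinv_le_contravar; nra.
Qed.

Lemma rem_x_bound r A B w x z : r <= 1/4 -> in_box r w x z ->
  Rabs (rem_x A B w x z) <= Kx A B * r.
Proof.
  intros Hr Hb. destruct Hb as [Hw [Hx Hz]].
  destruct (denom_inv_bounds x z ltac:(lra) ltac:(lra)) as [[I1 I2] [I3 I4]].
  assert (HE : Rabs (num_x w x z) <= 5 * r).
  { apply Rabs_le_between in Hw, Hx, Hz. unfold num_x. apply Rabs_le. split; nra. }
  pose proof (Rabs_pos A). pose proof (Rabs_pos B). pose proof (Rabs_pos x).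
  pose proof (Rabs_pos (num_x w x z)).
  unfold rem_x, Kx, Rdiv. unfold Rminus at 1.
  eapply Rle_trans; [apply Rabs_triang|]. rewrite Rabs_Ropp, !Rabs_mult.
  rewrite (Rabs_pos_eq (/ _)) by lra. rewrite (Rabs_pos_eq (/ (1 - x - z))) by lra.
  rewrite (Rabs_pos_eq 2) by lra.
  assert (Rabs A * Rabs (num_x w x z) * / (1 - x - z) ^ 2 <= Rabs A * (5 * r) * 4)
    by (apply Rmult_le_compat; try apply Rmult_le_compat_l; nra).
  assert (2 * Rabs B * Rabs x * / (1 - x - z) <= 2 * Rabs B * r * 2)
    by (apply Rmult_le_compat; try apply Rmult_le_compat_l; nra).
  lra.
Qed.

Lemma rem_z_bound r A B w x z : r <= 1/4 -> in_box r w x z -> Rabs (rem_z A B w x z) <= Kz A B.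
Proof.
  intros Hr Hb. destruct Hb as [Hw [Hx Hz]].
  destruct (denom_inv_bounds x z ltac:(lra) ltac:(lra)) as [[I1 I2] [I3 I4]].
  assert (Rabs (1 - w) <= 5/4) by (apply Rabs_le_between in Hw; apply Rabs_le; lra).
  pose proof (Rabs_pos A). pose proof (Rabs_pos B). pose proof (Rabs_pos (1 - w)).
  unfold rem_z, Kz, Rdiv.
  eapply Rle_trans; [apply Rabs_triang|]. rewrite !Rabs_mult.
  rewrite (Rabs_pos_eq (/ _)) by lra. rewrite (Rabs_pos_eq (/ (1 - x - z))) by lra.
  rewrite (Rabs_pos_eq 2) by lra.
  assert (2 * Rabs A * Rabs (1 - w) * / (1 - x - z) ^ 2 <= 2 * Rabs A * (5/4) * 4)
    by (apply Rmult_le_compat; try apply Rmult_le_compat_l; nra).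
  assert (2 * Rabs B * / (1 - x - z) <= 2 * Rabs B * 2)
    by (apply Rmult_le_compat_l; nra).
  lra.
Qed.

(** * Local existence through a clamped field *)

Definition box_lipschitz (f : R -> R -> R -> R) := exists L M, 0 <= L /\ 0 <= M /\
  forall a b c a' b' c', in_box (1/4) a b c -> in_box (1/4) a' b' c' ->
    Rabs (f a b c) <= M /\ Rabs (f a b c - f a' b' c') <= L * nrm3 (a-a') (b-b') (c-c').

Lemma box_lipschitz_ext f g : box_lipschitz f -> (forall a b c, f a b c = g a b c) -> box_lipschitz g.
Proof.
  intros [L [M [HL [HM H]]]] E. exists L, M. do 2 (split; auto). intros.
  rewrite <- !E. apply H; auto.
Qed.

Lemma box_lipschitz_const k : box_lipschitz (fun _ _ _ => k).
Proof.
  exists 0, (Rabs k). split; [lra|split; [apply Rabs_pos|]]. intros. split; [lra|].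
  rewrite Rminus_diag, Rabs_R0. lra.
Qed.

Lemma box_lipschitz_proj1 : box_lipschitz (fun a _ _ => a).
Proof.
  exists 1, (1/4). do 2 (split; [lra|]). intros a b c a' b' c' [H _] _.
  split; auto. rewrite Rmult_1_l. apply nrm3_ge_1.
Qed.

Lemma box_lipschitz_proj2 : box_lipschitz (fun _ b _ => b).
Proof.
  exists 1, (1/4). do 2 (split; [lra|]). intros a b c a' b' c' [_ [H _]] _.
  split; auto. rewrite Rmult_1_l. apply nrm3_ge_2.
Qed.

Lemma box_lipschitz_proj3 : box_lipschitz (fun _ _ c => c).
Proof.
  exists 1, (1/4). do 2 (split; [lra|]). intros a b c a' b' c' [_ [_ H]] _.
  split; auto. rewrite Rmult_1_l. apply nrm3_ge_3.
Qed.

Lemma box_lipschitz_plus f g :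
  box_lipschitz f -> box_lipschitz g -> box_lipschitz (fun a b c => f a b c + g a b c).
Proof.
  intros [L1 [M1 [HL1 [HM1 H1]]]] [L2 [M2 [HL2 [HM2 H2]]]].
  exists (L1 + L2), (M1 + M2). split; [lra|split; [lra|]].
  intros a b c a' b' c' Ha Hb.
  destruct (H1 _ _ _ _ _ _ Ha Hb) as [A1 B1], (H2 _ _ _ _ _ _ Ha Hb) as [A2 B2].
  split; [eapply Rle_trans; [apply Rabs_triang|lra]|].
  replace (f a b c + g a b c - (f a' b' c' + g a' b' c'))
    with ((f a b c - f a' b' c') + (g a b c - g a' b' c')) by ring.
  eapply Rle_trans; [apply Rabs_triang|lra].
Qed.

Lemma box_lipschitz_mult f g :
  box_lipschitz f -> box_lipschitz g -> box_lipschitz (fun a b c => f a b c * g a b c).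
Proof.
  intros [L1 [M1 [HL1 [HM1 H1]]]] [L2 [M2 [HL2 [HM2 H2]]]].
  exists (M1 * L2 + L1 * M2), (M1 * M2).
  split; [apply Rplus_le_le_0_compat; apply Rmult_le_pos; auto|split; [apply Rmult_le_pos; auto|]].
  intros a b c a' b' c' Ha Hb.
  destruct (H1 _ _ _ _ _ _ Ha Hb) as [A1 B1], (H2 _ _ _ _ _ _ Ha Hb) as [A2 B2].
  destruct (H2 _ _ _ _ _ _ Hb Ha) as [A2' _].
  split; [rewrite Rabs_mult; apply Rmult_le_compat; auto; apply Rabs_pos|].
  replace (f a b c * g a b c - f a' b' c' * g a' b' c')
    with (f a b c * (g a b c - g a' b' c') + (f a b c - f a' b' c') * g a' b' c') by ring.
  eapply Rle_trans; [apply Rabs_triang|]. rewrite !Rabs_mult.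
  set (n := nrm3 (a - a') (b - b') (c - c')). pose proof (nrm3_ge0 (a - a') (b - b') (c - c')).
  apply Rle_trans with (M1 * (L2 * n) + (L1 * n) * M2); [|right; ring].
  apply Rplus_le_compat; apply Rmult_le_compat; auto; apply Rabs_pos.
Qed.

Lemma box_lipschitz_minus f g :
  box_lipschitz f -> box_lipschitz g -> box_lipschitz (fun a b c => f a b c - g a b c).
Proof.
  intros Hf Hg. apply box_lipschitz_ext with (fun a b c => f a b c + (-1) * g a b c).
  - apply box_lipschitz_plus, box_lipschitz_mult; auto. apply box_lipschitz_const.
  - intros; ring.
Qed.

Lemma box_lipschitz_pow f n : box_lipschitz f -> box_lipschitz (fun a b c => f a b c ^ n).
Proof.
  intros H. induction n; simpl; [apply box_lipschitz_const|apply box_lipschitz_mult; auto].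
Qed.

Lemma box_lipschitz_inv f m : 0 < m -> (forall a b c, in_box (1/4) a b c -> m <= f a b c) ->
  box_lipschitz f -> box_lipschitz (fun a b c => / f a b c).
Proof.
  intros Hm Hf [L1 [M1 [HL1 [HM1 H1]]]].
  exists (L1 / (m * m)), (/ m).
  split; [apply Rmult_le_pos; auto; left; apply Rinv_0_lt_compat; nra|].
  split; [left; apply Rinv_0_lt_compat; lra|].
  intros a b c a' b' c' Ha Hb. destruct (H1 _ _ _ _ _ _ Ha Hb) as [A1 B1].
  pose proof (Hf _ _ _ Ha). pose proof (Hf _ _ _ Hb). split.
  - rewrite Rabs_pos_eq by (left; apply Rinv_0_lt_compat; lra).
    apply Rinv_le_contravar; lra.
  - replace (/ f a b c - / f a' b' c')
      with ((f a' b' c' - f a b c) / (f a b c * f a' b' c')) by (field; lra).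
    unfold Rdiv. rewrite Rabs_mult, Rabs_minus_sym.
    rewrite (Rabs_pos_eq (/ _)) by (left; apply Rinv_0_lt_compat; nra).
    assert (/ (f a b c * f a' b' c') <= / (m * m))
      by (apply Rinv_le_contravar; [nra|apply Rmult_le_compat; lra]).
    pose proof (nrm3_ge0 (a - a') (b - b') (c - c')).
    pose proof (Rabs_pos (f a b c - f a' b' c')).
    apply Rle_trans with ((L1 * nrm3 (a - a') (b - b') (c - c')) * / (m * m)); [|right; field; lra].
    apply Rmult_le_compat; auto. left; apply Rinv_0_lt_compat; nra.
Qed.

Ltac solve_box_lipschitz :=
  repeat first
    [ apply box_lipschitz_proj1 | apply box_lipschitz_proj2 | apply box_lipschitz_proj3
    | apply box_lipschitz_minus | apply box_lipschitz_plus | apply box_lipschitz_mult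
    | apply box_lipschitz_pow | apply box_lipschitz_const ].

Lemma denom_ge_half a b c : in_box (1/4) a b c -> 1/2 <= 1 - b - c.
Proof. intros [_ [H1 H2]]. apply Rabs_le_between in H1, H2. lra. Qed.

Lemma box_lipschitz_fw c1 : box_lipschitz (fw c1).
Proof. unfold fw. solve_box_lipschitz. Qed.

Lemma box_lipschitz_fx d A B : box_lipschitz (fx d A B).
Proof.
  unfold fx, Rdiv. solve_box_lipschitz.
  - apply box_lipschitz_inv with (1/4); [lra| |solve_box_lipschitz].
    intros a b c H. pose proof (denom_ge_half _ _ _ H). simpl. nra.
  - apply box_lipschitz_inv with (1/2); [lra| |solve_box_lipschitz].
    intros a b c H. pose proof (denom_ge_half _ _ _ H). lra.
Qed.

Lemma box_lipschitz_fz d A B : box_lipschitz (fz d A B).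
Proof.
  unfold fz, Rdiv. solve_box_lipschitz.
  - apply box_lipschitz_inv with (1/4); [lra| |solve_box_lipschitz].
    intros a b c H. pose proof (denom_ge_half _ _ _ H). simpl. nra.
  - apply box_lipschitz_inv with (1/2); [lra| |solve_box_lipschitz].
    intros a b c H. pose proof (denom_ge_half _ _ _ H). lra.
Qed.

Definition clamp (a : R) := Rmax (- (1/4)) (Rmin (1/4) a).

Lemma clamp_in_box a b c : in_box (1/4) (clamp a) (clamp b) (clamp c).
Proof.
  assert (H : forall v, Rabs (clamp v) <= 1/4)
    by (intros v; unfold clamp, Rmax, Rmin; repeat destruct Rle_dec;
        unfold Rabs; destruct Rcase_abs; lra).
  repeat split; apply H.
Qed.

Lemma clamp_lipschitz a b : Rabs (clamp a - clamp b) <= Rabs (a - b).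
Proof. unfold clamp, Rmax, Rmin. repeat destruct Rle_dec; unfold Rabs; repeat destruct Rcase_abs; lra. Qed.

Lemma clamp_id a : Rabs a <= 1/4 -> clamp a = a.
Proof.
  intros H. apply Rabs_le_between in H. unfold clamp, Rmax, Rmin. repeat destruct Rle_dec; lra.
Qed.

Lemma clamp_lipschitz_bounded f : box_lipschitz f -> exists L M, 0 <= L /\ 0 <= M /\
  forall a b c a' b' c',
  Rabs (f (clamp a) (clamp b) (clamp c)) <= M /\
  Rabs (f (clamp a) (clamp b) (clamp c) - f (clamp a') (clamp b') (clamp c'))
    <= L * nrm3 (a - a') (b - b') (c - c').
Proof.
  intros [L [M [HL [HM H]]]]. exists L, M. do 2 (split; auto). intros.
  destruct (H _ _ _ _ _ _ (clamp_in_box a b c) (clamp_in_box a' b' c')) as [X Y].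
  split; auto. eapply Rle_trans; [apply Y|]. apply Rmult_le_compat_l; auto.
  apply nrm3_le; (eapply Rle_trans; [apply clamp_lipschitz|]);
    [apply nrm3_ge_1|apply nrm3_ge_2|apply nrm3_ge_3].
Qed.

Definition clamped_field c1 d A B (i : nat) (a b c : R) : R :=
  match i with
  | O => fw c1 (clamp a) (clamp b) (clamp c)
  | S O => fx d A B (clamp a) (clamp b) (clamp c)
  | _ => fz d A B (clamp a) (clamp b) (clamp c)
  end.

Lemma clamped_field_in_box c1 d A B w x z : in_box (1/4) w x z ->
  clamped_field c1 d A B 0 w x z = fw c1 w x z /\
  clamped_field c1 d A B 1 w x z = fx d A B w x z /\
  clamped_field c1 d A B 2 w x z = fz d A B w x z.
Proof. intros [Hw [Hx Hz]]. simpl. rewrite !clamp_id by auto. auto. Qed.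

Lemma exists_clamped_solution c1 d A B w0 x0 z0 :
  exists W X Z : R -> R, W 0 = w0 /\ X 0 = x0 /\ Z 0 = z0 /\
    (forall t, continuous W t /\ continuous X t /\ continuous Z t) /\
    (forall t, 0 < t ->
       is_derive W t (clamped_field c1 d A B 0 (W t) (X t) (Z t)) /\
       is_derive X t (clamped_field c1 d A B 1 (W t) (X t) (Z t)) /\
       is_derive Z t (clamped_field c1 d A B 2 (W t) (X t) (Z t))).
Proof.
  destruct (clamp_lipschitz_bounded _ (box_lipschitz_fw c1)) as [L1 [M1 [HL1 [HM1 H1]]]].
  destruct (clamp_lipschitz_bounded _ (box_lipschitz_fx d A B)) as [L2 [M2 [HL2 [HM2 H2]]]].
  destruct (clamp_lipschitz_bounded _ (box_lipschitz_fz d A B)) as [L3 [M3 [HL3 [HM3 H3]]]].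
  set (init := fun i : nat => match i with O => w0 | S O => x0 | _ => z0 end).
  destruct (picard_global_existence (clamped_field c1 d A B) init
              (L1 + L2 + L3 + 1) (M1 + M2 + M3)) as [f [F0 [FC FD]]]; [lra|lra| | |].
  - intros i a b c a' b' c'. pose proof (nrm3_ge0 (a - a') (b - b') (c - c')).
    destruct i as [|[|i]]; simpl;
      [destruct (H1 a b c a' b' c') as [_ X]|destruct (H2 a b c a' b' c') as [_ X]
      |destruct (H3 a b c a' b' c') as [_ X]]; (eapply Rle_trans; [apply X|nra]).
  - intros i a b c. destruct i as [|[|i]]; simpl;
      [destruct (H1 a b c a b c) as [X _]|destruct (H2 a b c a b c) as [X _]
      |destruct (H3 a b c a b c) as [X _]]; lra.
  - exists (f 0%nat), (f 1%nat), (f 2%nat). rewrite !F0.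
    do 3 (split; [reflexivity|]). split; [intros; auto|].
    intros t Ht. repeat split; apply FD; auto.
Qed.

(** * Below the threshold: a quadratic Lyapunov function *)

Lemma exists_small_radius K m : 0 <= K -> 0 < m ->
  exists r, 0 < r /\ r <= 1/8 /\ r * K <= m.
Proof.
  intros HK Hm. exists (Rmin (1/8) (m / (K + 1))).
  assert (Hq : 0 < m / (K + 1)) by (apply Rdiv_lt_0_compat; lra).
  split; [apply Rmin_glb_lt; lra|split; [apply Rmin_l|]].
  apply Rle_trans with (m / (K + 1) * (K + 1)); [|right; field; lra].
  apply Rmult_le_compat; try lra; [apply Rmin_glb; lra|apply Rmin_r].
Qed.

(* Derivatives need only match the field inside the box of radius 1/4, so that
   solutions of the clamped field qualify as well. *)
Definition box_traj c1 d A B (W X Z DW DX DZ : R -> R) (T : Rbar) :=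
  rcont W 0 /\ rcont X 0 /\ rcont Z 0 /\
  (forall t, 0 < t -> Rbar_lt t T ->
     is_derive W t (DW t) /\ is_derive X t (DX t) /\ is_derive Z t (DZ t)) /\
  (forall t, 0 < t -> Rbar_lt t T -> in_box (1/4) (W t) (X t) (Z t) ->
     DW t = fw c1 (W t) (X t) (Z t) /\ DX t = fx d A B (W t) (X t) (Z t) /\
     DZ t = fz d A B (W t) (X t) (Z t)).

Section Lyapunov.

Variables c1 d A B : R.
Hypotheses (d_pos : 0 < d) (gap_pos : 0 < 1 - A - B).

Definition lyap_weight := d * (1 - A - B) / (c1 ^ 2 + 1).
Definition lyap (w x z : R) := lyap_weight * w ^ 2 + 2 * d * x ^ 2 + z ^ 2.
Definition lyap_dot (w x z : R) :=
  2 * lyap_weight * w * fw c1 w x z + 4 * d * x * fx d A B w x z + 2 * z * fz d A B w x z.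
Definition lyap_rate := Rmin 1 ((1 - A - B) / (1 + d)).
Definition lyap_coercivity := Rmin lyap_weight (Rmin (2 * d) 1).

Lemma lyap_weight_pos : 0 < lyap_weight.
Proof. unfold lyap_weight. apply Rdiv_lt_0_compat; nra. Qed.

Lemma lyap_rate_pos : 0 < lyap_rate.
Proof. unfold lyap_rate. apply Rmin_glb_lt; [lra|apply Rdiv_lt_0_compat; lra]. Qed.

Lemma lyap_coercivity_pos : 0 < lyap_coercivity.
Proof.
  pose proof lyap_weight_pos. unfold lyap_coercivity.
  apply Rmin_glb_lt; auto. apply Rmin_glb_lt; lra.
Qed.

Lemma lyap_ge0 w x z : 0 <= lyap w x z.
Proof.
  pose proof lyap_weight_pos. unfold lyap.
  pose proof (pow2_ge_0 w). pose proof (pow2_ge_0 x). pose proof (pow2_ge_0 z). nra.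
Qed.

Lemma lyap_ge_coord w x z :
  lyap_coercivity * w ^ 2 <= lyap w x z /\ lyap_coercivity * x ^ 2 <= lyap w x z /\
  lyap_coercivity * z ^ 2 <= lyap w x z.
Proof.
  pose proof lyap_weight_pos as He.
  assert (H1 : lyap_coercivity <= lyap_weight) by apply Rmin_l.
  assert (H2 : lyap_coercivity <= 2 * d) by (eapply Rle_trans; [apply Rmin_r|apply Rmin_l]).
  assert (H3 : lyap_coercivity <= 1) by (eapply Rle_trans; [apply Rmin_r|apply Rmin_r]).
  pose proof lyap_coercivity_pos. unfold lyap.
  pose proof (pow2_ge_0 w). pose proof (pow2_ge_0 x). pose proof (pow2_ge_0 z).
  repeat split; nra.
Qed.

Lemma lyap_le_nrm3 w x z : lyap w x z <= (lyap_weight + 2 * d + 1) * nrm3 w x z ^ 2.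
Proof.
  pose proof lyap_weight_pos. unfold lyap.
  pose proof (sqr_le_of_Rabs_le w _ (nrm3_ge_1 w x z)).
  pose proof (sqr_le_of_Rabs_le x _ (nrm3_ge_2 w x z)).
  pose proof (sqr_le_of_Rabs_le z _ (nrm3_ge_3 w x z)). nra.
Qed.

Lemma nrm3_lt_of_lyap_lt rho w x z : 0 < rho ->
  lyap w x z < lyap_coercivity * rho ^ 2 -> nrm3 w x z < rho.
Proof.
  intros Hr HV. pose proof lyap_coercivity_pos. destruct (lyap_ge_coord w x z) as [Hw [Hx Hz]].
  assert (G : forall v, lyap_coercivity * v ^ 2 < lyap_coercivity * rho ^ 2 -> Rabs v < rho).
  { intros v Hv. apply Rnot_le_lt. intros Hc.
    pose proof (sqr_le_of_Rabs_le rho (Rabs v) ltac:(rewrite Rabs_pos_eq; lra)).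
    rewrite pow2_abs in *. nra. }
  apply nrm3_lt; apply G; lra.
Qed.

Lemma lyap_lt_of_nrm3_lt rho w x z : 0 < rho ->
  nrm3 w x z < rho * lyap_coercivity / (lyap_weight + 2 * d + 1) ->
  lyap w x z < lyap_coercivity * rho ^ 2.
Proof.
  intros Hr Hn. pose proof lyap_weight_pos. pose proof lyap_coercivity_pos.
  assert (H3 : lyap_coercivity <= 1) by (eapply Rle_trans; [apply Rmin_r|apply Rmin_r]).
  pose proof (lyap_le_nrm3 w x z). pose proof (nrm3_ge0 w x z).
  set (m := lyap_coercivity) in *. set (K := lyap_weight + 2 * d + 1) in *.
  set (n := nrm3 w x z) in *.
  assert (HK : 1 <= K) by (unfold K; lra).
  assert (n ^ 2 < (rho * m / K) ^ 2)
    by (assert (0 < rho * m / K) by (apply Rdiv_lt_0_compat; nra); nra).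
  assert (K * (rho * m / K) ^ 2 = rho ^ 2 * m * (m / K)) by (field; lra).
  assert (m / K <= 1)
    by (apply Rmult_le_reg_r with K; [lra|]; unfold Rdiv; rewrite Rmult_assoc, Rinv_l; lra).
  assert (0 < rho ^ 2 * m) by (apply Rmult_lt_0_compat; [apply pow_lt|]; lra).
  nra.
Qed.

Lemma lyap_weight_coupling : lyap_weight * c1 ^ 2 <= d * (1 - A - B).
Proof.
  unfold lyap_weight. set (e := 1 - A - B).
  apply Rle_trans with (d * e * (c1 ^ 2 / (c1 ^ 2 + 1))); [right; field; nra|].
  rewrite <- (Rmult_1_r (d * e)) at 2. apply Rmult_le_compat_l; [unfold e; nra|].
  apply Rmult_le_reg_r with (c1 ^ 2 + 1); [nra|].
  unfold Rdiv. rewrite Rmult_assoc, Rinv_l by nra. nra.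
Qed.

Lemma lyap_rate_le : lyap_rate <= 1 /\ lyap_rate * (1 + d) <= 1 - A - B.
Proof.
  split; [apply Rmin_l|].
  apply Rle_trans with (((1 - A - B) / (1 + d)) * (1 + d)); [|right; field; lra].
  apply Rmult_le_compat_r; [lra|apply Rmin_r].
Qed.

(* The quadratic part of [lyap_dot], with the nonlinear terms gathered in [x^2 N];
   [lyap_weight_coupling] lets [-2 eps w^2] absorb the coupling [c1 x] of the [w] equation. *)
Lemma lyap_quadratic_le w x z N : Rabs N <= d * (1 - A - B) ->
  - 2 * lyap_weight * w ^ 2 + 2 * lyap_weight * c1 * w * x - 4 * (d * x - z) ^ 2
  - 4 * d * (1 - A - B) * x ^ 2 + x ^ 2 * N <= - lyap_rate * lyap w x z.
Proof.
  intros HN. apply Rabs_le_between in HN.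
  pose proof lyap_weight_pos as Heps. pose proof lyap_weight_coupling as Hepsc.
  pose proof lyap_rate_pos as Hc0. destruct lyap_rate_le as [Hc1 Hc2].
  set (e := 1 - A - B) in *.
  unfold lyap. set (eps := lyap_weight) in *. set (c := lyap_rate) in *.
  assert (X2 : x ^ 2 * N <= d * e * x ^ 2) by (pose proof (pow2_ge_0 x); nra).
  assert (X3 : 2 * eps * c1 * w * x <= eps * w ^ 2 + eps * c1 ^ 2 * x ^ 2)
    by (pose proof (Rmult_le_pos eps _ (Rlt_le _ _ Heps) (pow2_ge_0 (w - c1 * x))); nra).
  assert (X4 : eps * c1 ^ 2 * x ^ 2 <= d * e * x ^ 2) by (apply Rmult_le_compat_r; nra).
  assert (Y1 : c * (eps * w ^ 2) <= eps * w ^ 2)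
    by (assert (0 <= eps * w ^ 2) by (apply Rmult_le_pos; nra); nra).
  assert (Y2 : c * z ^ 2 <= c * (2 * (d * x - z) ^ 2 + 2 * d ^ 2 * x ^ 2))
    by (apply Rmult_le_compat_l; [lra|pose proof (pow2_ge_0 (2 * d * x - z)); nra]).
  assert (Y3 : c * (2 * d * x ^ 2 + 2 * d ^ 2 * x ^ 2) <= 2 * d * e * x ^ 2).
  { replace (c * (2 * d * x ^ 2 + 2 * d ^ 2 * x ^ 2)) with ((c * (1 + d)) * (2 * d * x ^ 2)) by ring.
    replace (2 * d * e * x ^ 2) with (e * (2 * d * x ^ 2)) by ring.
    apply Rmult_le_compat_r; nra. }
  assert (Y4 : c * (2 * (d * x - z) ^ 2) <= 4 * (d * x - z) ^ 2)
    by (pose proof (pow2_ge_0 (d * x - z)); nra).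
  nra.
Qed.

Lemma lyap_dot_le r w x z : r <= 1/8 ->
  r * (4 * d * Kx A B + 2 * Kz A B) <= d * (1 - A - B) -> in_box r w x z ->
  lyap_dot w x z <= - lyap_rate * lyap w x z.
Proof.
  intros Hr Hrr Hb.
  pose proof (rem_x_bound r A B w x z ltac:(lra) Hb) as Hh.
  pose proof (rem_z_bound r A B w x z ltac:(lra) Hb) as Hg.
  destruct Hb as [Hw [Hx Hz]].
  set (h := rem_x A B w x z) in *. set (g := rem_z A B w x z) in *.
  replace (lyap_dot w x z) with
    (- 2 * lyap_weight * w ^ 2 + 2 * lyap_weight * c1 * w * x - 4 * (d * x - z) ^ 2
     - 4 * d * (1 - A - B) * x ^ 2 + x ^ 2 * (4 * d * h + 2 * z * g)).
  2: { apply Rabs_le_between in Hx, Hz.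
       unfold lyap_dot, fw. rewrite fx_normal, fz_normal by lra. fold h g. ring. }
  apply lyap_quadratic_le.
  eapply Rle_trans; [apply Rabs_triang|]. rewrite !Rabs_mult.
  rewrite (Rabs_pos_eq 4), (Rabs_pos_eq 2), (Rabs_pos_eq d) by lra.
  pose proof (Rabs_pos z). pose proof (Rabs_pos g). pose proof (Rabs_pos h).
  assert (Rabs z * Rabs g <= r * Kz A B) by (apply Rmult_le_compat; auto; lra).
  nra.
Qed.

Lemma rcont_lyap (W X Z : R -> R) :
  rcont W 0 -> rcont X 0 -> rcont Z 0 -> rcont (fun t => lyap (W t) (X t) (Z t)) 0.
Proof.
  intros. unfold lyap. apply rcont_plus; [apply rcont_plus|].
  - apply rcont_mult; [apply rcont_const|apply rcont_pow; auto].
  - apply rcont_mult; [apply rcont_const|apply rcont_pow; auto].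
  - apply rcont_pow; auto.
Qed.

Lemma is_derive_lyap (W X Z : R -> R) (t a b c : R) :
  is_derive W t a -> is_derive X t b -> is_derive Z t c ->
  is_derive (fun s => lyap (W s) (X s) (Z s)) t
    (2 * lyap_weight * W t * a + 4 * d * X t * b + 2 * Z t * c).
Proof.
  intros H1 H2 H3. unfold lyap. eapply is_derive_eq_val.
  - apply is_derive_plus_R; [apply is_derive_plus_R|].
    + apply is_derive_scal_R, is_derive_sqr_R; eauto.
    + apply (is_derive_scal_R (2 * d) (fun s => X s ^ 2)), is_derive_sqr_R; eauto.
    + apply is_derive_sqr_R; eauto.
  - ring.
Qed.

Variable r : R.
Hypotheses (r_pos : 0 < r) (r_le : r <= 1/8)
  (r_small : r * (4 * d * Kx A B + 2 * Kz A B) <= d * (1 - A - B)).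

Lemma lyap_dot_le_traj W X Z DW DX DZ T rho t :
  box_traj c1 d A B W X Z DW DX DZ T -> rho <= r -> 0 < t -> Rbar_lt t T ->
  nrm3 (W t) (X t) (Z t) < rho ->
  2 * lyap_weight * W t * DW t + 4 * d * X t * DX t + 2 * Z t * DZ t
    <= - lyap_rate * lyap (W t) (X t) (Z t).
Proof.
  intros [_ [_ [_ [_ HF]]]] Hrho Ht HT Hn.
  destruct (HF t Ht HT ltac:(apply in_box_nrm3; lra)) as [E1 [E2 E3]].
  rewrite E1, E2, E3. apply lyap_dot_le with r; auto. apply in_box_nrm3; lra.
Qed.

Lemma lyap_nonincreasing W X Z DW DX DZ T rho :
  box_traj c1 d A B W X Z DW DX DZ T -> 0 < rho -> rho <= r ->
  lyap (W 0) (X 0) (Z 0) < lyap_coercivity * rho ^ 2 ->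
  forall t, 0 <= t -> Rbar_lt t T ->
    lyap (W t) (X t) (Z t) <= lyap (W 0) (X 0) (Z 0) /\ nrm3 (W t) (X t) (Z t) < rho.
Proof.
  intros HT Hr Hrr H0.
  pose proof HT as [RW [RX [RZ [HD _]]]].
  assert (Hb : forall t, 0 <= t -> Rbar_lt t T ->
                lyap (W t) (X t) (Z t) <= lyap (W 0) (X 0) (Z 0)).
  { apply (barrier_le (fun t => lyap (W t) (X t) (Z t))
             (fun t => 2 * lyap_weight * W t * DW t + 4 * d * X t * DX t + 2 * Z t * DZ t)
             T (lyap_coercivity * rho ^ 2)); auto.
    - apply rcont_lyap; auto.
    - intros t Ht HTt. destruct (HD t Ht HTt) as [D1 [D2 D3]]. apply is_derive_lyap; auto.
    - intros t Ht HTt HV.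
      pose proof (lyap_dot_le_traj W X Z DW DX DZ T rho t HT Hrr Ht HTt
                    (nrm3_lt_of_lyap_lt rho _ _ _ Hr HV)).
      pose proof lyap_rate_pos. pose proof (lyap_ge0 (W t) (X t) (Z t)). nra. }
  intros t Ht HTt. split; auto.
  apply nrm3_lt_of_lyap_lt; auto. eapply Rle_lt_trans; [apply Hb|]; auto.
Qed.

Lemma lyap_decay W X Z DW DX DZ :
  box_traj c1 d A B W X Z DW DX DZ p_infty ->
  lyap (W 0) (X 0) (Z 0) < lyap_coercivity * r ^ 2 ->
  forall t, 0 <= t -> lyap (W t) (X t) (Z t) * (1 + lyap_rate * t) <= lyap (W 0) (X 0) (Z 0).
Proof.
  intros HT H0 t Ht.
  pose proof (lyap_nonincreasing W X Z DW DX DZ p_infty r HT r_pos (Rle_refl r) H0) as Stay.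
  pose proof HT as [RW [RX [RZ [HD _]]]].
  pose proof lyap_rate_pos as Hc. set (c := lyap_rate) in *.
  set (V := fun t => lyap (W t) (X t) (Z t)).
  set (dV := fun t => 2 * lyap_weight * W t * DW t + 4 * d * X t * DX t + 2 * Z t * DZ t).
  assert (M : V t * (1 + c * t) <= V 0 * (1 + c * 0)).
  { apply (le_of_derive_nonpos (fun t => V t * (1 + c * t))
             (fun t => dV t * (1 + c * t) + V t * c) 0 p_infty); auto; [| |exact I].
    - apply rcont_mult; [apply rcont_lyap; auto|].
      apply rcont_plus; [apply rcont_const|apply rcont_mult; [apply rcont_const|apply rcont_id]].
    - intros s Hs _. destruct (HD s Hs I) as [D1 [D2 D3]]. split.
      + eapply is_derive_eq_val; [apply is_derive_mult_R;
          [apply is_derive_lyap; eauto|apply is_derive_affine]|reflexivity].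
      + destruct (Stay s ltac:(lra) I) as [_ Hn].
        pose proof (lyap_dot_le_traj W X Z DW DX DZ p_infty r s HT (Rle_refl r) Hs I Hn) as L.
        fold c in L. fold (dV s) (V s) in L.
        pose proof (lyap_ge0 (W s) (X s) (Z s)) as VN. fold (V s) in VN.
        assert (0 <= 1 + c * s) by nra.
        assert (dV s * (1 + c * s) <= - c * V s * (1 + c * s)) by (apply Rmult_le_compat_r; auto).
        assert (0 <= c * c * s * V s) by (repeat apply Rmult_le_pos; auto; lra).
        nra. }
  unfold V in M. rewrite Rmult_0_r, Rplus_0_r, Rmult_1_r in M. exact M.
Qed.

Lemma exists_small_solution rho w0 x0 z0 : 0 < rho -> rho <= r ->
  lyap w0 x0 z0 < lyap_coercivity * rho ^ 2 ->
  exists W X Z : R -> R, W 0 = w0 /\ X 0 = x0 /\ Z 0 = z0 /\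
    rcont W 0 /\ rcont X 0 /\ rcont Z 0 /\
    (forall t, 0 <= t -> nrm3 (W t) (X t) (Z t) < rho) /\
    (forall t, 0 < t -> is_derive W t (fw c1 (W t) (X t) (Z t)) /\
                        is_derive X t (fx d A B (W t) (X t) (Z t)) /\
                        is_derive Z t (fz d A B (W t) (X t) (Z t))).
Proof.
  intros Hr Hrr HV.
  destruct (exists_clamped_solution c1 d A B w0 x0 z0) as [W [X [Z [I1 [I2 [I3 [FC FD]]]]]]].
  assert (HT : box_traj c1 d A B W X Z
     (fun t => clamped_field c1 d A B 0 (W t) (X t) (Z t))
     (fun t => clamped_field c1 d A B 1 (W t) (X t) (Z t))
     (fun t => clamped_field c1 d A B 2 (W t) (X t) (Z t)) p_infty).
  { split; [|split; [|split; [|split]]]; try (apply rcont_of_continuous, FC).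
    - intros t Ht _. apply FD; auto.
    - intros t _ _ Hb. apply clamped_field_in_box; auto. }
  rewrite <- I1, <- I2, <- I3 in HV.
  pose proof (lyap_nonincreasing W X Z _ _ _ p_infty rho HT Hr Hrr HV) as Stay.
  exists W, X, Z. do 3 (split; auto). destruct HT as [RW [RX [RZ _]]].
  do 3 (split; auto). split; [intros t Ht; apply Stay; auto; exact I|].
  intros t Ht. destruct (Stay t ltac:(lra) I) as [_ Hn].
  destruct (clamped_field_in_box c1 d A B (W t) (X t) (Z t) ltac:(apply in_box_nrm3; lra))
    as [E1 [E2 E3]].
  rewrite <- E1, <- E2, <- E3. apply FD; auto.
Qed.

End Lyapunov.

(** * Stability below the threshold *)

Lemma box_traj_of_solution k1 k2 k3 d T w x z : is_solution k1 k2 k3 d T w x z ->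
  box_traj (k1 * d) d (alpha k1 k2 k3 * d / k1) (beta k1 k2 k3 * d) w x z
    (fun t => Fw k1 k2 k3 d (w t) (x t) (z t))
    (fun t => Fx k1 k2 k3 d (w t) (x t) (z t))
    (fun t => Fz k1 k2 k3 d (w t) (x t) (z t)) T.
Proof.
  intros [_ [_ [RW [RX [RZ HD]]]]]. do 4 (split; auto).
  intros t _ _ _. rewrite Fw_fw, Fx_fx, Fz_fz. auto.
Qed.

Lemma is_lim_0_of_sqr_decay (W : R -> R) (K c : R) : 0 < c ->
  (forall t, 0 <= t -> W t ^ 2 * (1 + c * t) <= K) -> is_lim W p_infty 0.
Proof.
  intros Hc H. apply is_lim_spec. simpl. intros eps. pose proof (cond_pos eps) as He.
  exists (Rmax 0 (K / (c * (eps * eps)))). intros t Ht.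
  pose proof (Rmax_l 0 (K / (c * (eps * eps)))). pose proof (Rmax_r 0 (K / (c * (eps * eps)))).
  rewrite Rminus_0_r. apply Rnot_le_lt. intros Hle.
  specialize (H t ltac:(lra)).
  assert (eps * eps <= W t ^ 2)
    by (rewrite <- (pow2_abs (W t)); simpl; rewrite Rmult_1_r; apply Rmult_le_compat; lra).
  assert (eps * eps * (1 + c * t) <= W t ^ 2 * (1 + c * t)) by (apply Rmult_le_compat_r; nra).
  assert (0 < eps * eps) by nra.
  assert (t < K / (c * (eps * eps))).
  { apply Rmult_lt_reg_l with (c * (eps * eps)); [nra|].
    replace (c * (eps * eps) * (K / (c * (eps * eps)))) with K by (field; nra). nra. }
  lra.
Qed.

Section Stable.

Variables k1 k2 k3 d : R.
Let c1 := k1 * d.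
Let A := alpha k1 k2 k3 * d / k1.
Let B := beta k1 k2 k3 * d.
Hypotheses (d_pos : 0 < d) (gap_pos : 0 < 1 - A - B).

Lemma exists_lyap_radius : exists r, 0 < r /\ r <= 1/8 /\
  r * (4 * d * Kx A B + 2 * Kz A B) <= d * (1 - A - B).
Proof.
  apply exists_small_radius; [|nra].
  pose proof (Kx_ge0 A B). pose proof (Kz_ge0 A B). nra.
Qed.

Lemma dfe_stable_of_gap : dfe_stable k1 k2 k3 d.
Proof.
  destruct exists_lyap_radius as [r [Hr0 [Hr1 Hr2]]].
  pose proof (lyap_weight_pos c1 d A B d_pos gap_pos).
  pose proof (lyap_coercivity_pos c1 d A B d_pos gap_pos).
  intros eps Heps. set (rho := Rmin eps r).
  assert (Hr : 0 < rho) by (apply Rmin_glb_lt; lra).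
  assert (Hre : rho <= eps) by apply Rmin_l.
  assert (Hrr : rho <= r) by apply Rmin_r.
  exists (rho * lyap_coercivity c1 d A B / (lyap_weight c1 d A B + 2 * d + 1)).
  split; [apply Rdiv_lt_0_compat; nra|].
  intros w0 x0 z0 Hn.
  pose proof (lyap_lt_of_nrm3_lt c1 d A B d_pos gap_pos rho w0 x0 z0 Hr Hn) as HV.
  split.
  - destruct (exists_small_solution c1 d A B d_pos gap_pos r Hr0 Hr1 Hr2 rho w0 x0 z0 Hr Hrr HV)
      as [W [X [Z [I1 [I2 [I3 [RW [RX [RZ [Hb HD]]]]]]]]]].
    exists W, X, Z. split; [|auto].
    split; [exact I|split; [|do 3 (split; auto)]].
    + intros t Ht _. pose proof (Hb t Ht) as Hn'.
      pose proof (nrm3_ge_2 (W t) (X t) (Z t)). pose proof (nrm3_ge_3 (W t) (X t) (Z t)).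
      assert (Hx : Rabs (X t) <= 1/8) by lra. assert (Hz : Rabs (Z t) <= 1/8) by lra.
      apply Rabs_le_between in Hx, Hz. lra.
    + intros t Ht _. rewrite Fw_fw, Fx_fx, Fz_fz. apply HD; auto.
  - intros T w x z Hsol E1 E2 E3 t Ht HT.
    rewrite <- E1, <- E2, <- E3 in HV.
    destruct (lyap_nonincreasing c1 d A B d_pos gap_pos r Hr0 Hr1 Hr2 w x z _ _ _ T rho
                (box_traj_of_solution k1 k2 k3 d T w x z Hsol) Hr Hrr HV t Ht HT) as [_ Hn'].
    lra.
Qed.

Lemma dfe_attractive_of_gap : dfe_attractive k1 k2 k3 d.
Proof.
  destruct exists_lyap_radius as [r [Hr0 [Hr1 Hr2]]].
  pose proof (lyap_weight_pos c1 d A B d_pos gap_pos).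
  pose proof (lyap_coercivity_pos c1 d A B d_pos gap_pos) as Hm.
  pose proof (lyap_rate_pos d A B d_pos gap_pos) as Hc.
  exists (r * lyap_coercivity c1 d A B / (lyap_weight c1 d A B + 2 * d + 1)).
  split; [apply Rdiv_lt_0_compat; nra|].
  intros w x z Hsol Hn.
  pose proof (lyap_lt_of_nrm3_lt c1 d A B d_pos gap_pos r _ _ _ Hr0 Hn) as HV.
  pose proof (lyap_decay c1 d A B d_pos gap_pos r Hr0 Hr1 Hr2 w x z _ _ _
                (box_traj_of_solution k1 k2 k3 d p_infty w x z Hsol) HV) as Decay.
  set (V0 := lyap c1 d A B (w 0) (x 0) (z 0)) in *.
  set (m := lyap_coercivity c1 d A B) in *.
  assert (G : forall f : R -> R, (forall t, m * f t ^ 2 <= lyap c1 d A B (w t) (x t) (z t)) ->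
                                 is_lim f p_infty 0).
  { intros f Hf. apply is_lim_0_of_sqr_decay with (V0 / m) (lyap_rate d A B); auto.
    intros t Ht. specialize (Decay t Ht). specialize (Hf t).
    assert (0 <= 1 + lyap_rate d A B * t) by nra.
    apply Rmult_le_reg_l with m; auto.
    replace (m * (V0 / m)) with V0 by (field; lra).
    rewrite <- Rmult_assoc. eapply Rle_trans; [|apply Decay]. apply Rmult_le_compat_r; auto. }
  split; [|split]; apply G; intros t; apply (lyap_ge_coord c1 d A B d_pos gap_pos).
Qed.

End Stable.

(** * Instability above the threshold: a Chetaev function *)

Definition char_poly d A B l := l ^ 2 - ((-(d + 1) + A + B) - 2) * l - 2 * ((-(d + 1) + A + B) + d).

(* The (x, z) block of the linearization has eigenvalues of opposite signs
   as soon as its determinant [2 (1 - A - B)] is negative. *)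
Lemma char_poly_saddle d A B : 1 < A + B ->
  exists lp lm, 0 < lp /\ lm < 0 /\ char_poly d A B lp = 0 /\ char_poly d A B lm = 0.
Proof.
  intros Hgap. set (a := -(d + 1) + A + B).
  set (disc := (a - 2) ^ 2 + 8 * (A + B - 1)).
  assert (Hdisc : 0 < disc) by (unfold disc; pose proof (pow2_ge_0 (a - 2)); lra).
  set (s := sqrt disc).
  assert (Hs2 : s * s = disc) by (apply sqrt_sqrt; lra).
  assert (Hs0 : 0 < s) by (apply sqrt_lt_R0; auto).
  assert (Hsa : a - 2 < s /\ 2 - a < s).
  { assert ((a - 2) ^ 2 < s * s) by (rewrite Hs2; unfold disc; lra). split; nra. }
  exists ((a - 2 + s) / 2), ((a - 2 - s) / 2).
  split; [lra|split; [lra|]].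
  split; unfold char_poly; fold a;
    [replace (((a - 2 + s) / 2) ^ 2 - (a - 2) * ((a - 2 + s) / 2) - 2 * (a + d))
       with ((s * s - disc) / 4) by (unfold disc, a; field)
    |replace (((a - 2 - s) / 2) ^ 2 - (a - 2) * ((a - 2 - s) / 2) - 2 * (a + d))
       with ((s * s - disc) / 4) by (unfold disc, a; field)];
    rewrite Hs2; field.
Qed.

Definition eig_coord (l x z : R) := (l + 2) * x + z.

Lemma eig_coord_dyn d A B l w x z : 1 - x - z <> 0 -> char_poly d A B l = 0 ->
  (l + 2) * fx d A B w x z + fz d A B w x z =
    l * eig_coord l x z + x * ((l + 2) * rem_x A B w x z + x * rem_z A B w x z).
Proof.
  intros HD Hc. rewrite fx_normal, fz_normal by auto. unfold eig_coord.
  apply Rminus_diag_uniq. unfold char_poly in Hc.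
  set (a := -(d + 1) + A + B) in *.
  transitivity (- x * (l ^ 2 - (a - 2) * l - 2 * (a + d))); [unfold a; ring|].
  rewrite Hc. ring.
Qed.

Lemma eig_rem_bound r A B l w x z : r <= 1/4 -> in_box r w x z ->
  Rabs ((l + 2) * rem_x A B w x z + x * rem_z A B w x z) <= r * (Rabs (l + 2) * Kx A B + Kz A B).
Proof.
  intros Hr Hb. pose proof (rem_x_bound r A B w x z Hr Hb). pose proof (rem_z_bound r A B w x z Hr Hb).
  destruct Hb as [_ [Hx _]].
  eapply Rle_trans; [apply Rabs_triang|]. rewrite !Rabs_mult.
  pose proof (Rabs_pos (l + 2)). pose proof (Rabs_pos x). pose proof (Rabs_pos (rem_z A B w x z)).
  assert (Rabs (l + 2) * Rabs (rem_x A B w x z) <= Rabs (l + 2) * (Kx A B * r))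
    by (apply Rmult_le_compat_l; auto).
  assert (Rabs x * Rabs (rem_z A B w x z) <= r * Kz A B) by (apply Rmult_le_compat; auto).
  nra.
Qed.

Lemma cross_term_ge (y x P K : R) : Rabs P <= K -> - (K * (y ^ 2 + x ^ 2)) <= 2 * y * (x * P).
Proof.
  intros H. apply Rabs_le_between in H.
  pose proof (pow2_ge_0 (y - x)). pose proof (pow2_ge_0 (y + x)).
  destruct (Rle_dec 0 (y * x)).
  - assert (y * x * P >= - (K * (y * x))) by nra. nra.
  - assert (y * x * P >= K * (y * x)) by nra. nra.
Qed.

Section Chetaev.

Variables d A B lp lm : R.
Hypotheses (lp_pos : 0 < lp) (lm_neg : lm < 0)
  (lp_root : char_poly d A B lp = 0) (lm_root : char_poly d A B lm = 0).

Definition chetaev (x z : R) := eig_coord lp x z ^ 2 - eig_coord lm x z ^ 2.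
Definition chetaev_dot (w x z : R) :=
  2 * eig_coord lp x z * ((lp + 2) * fx d A B w x z + fz d A B w x z)
  - 2 * eig_coord lm x z * ((lm + 2) * fx d A B w x z + fz d A B w x z).
Definition chetaev_rate := Rmin lp (- lm).
Definition chetaev_const :=
  ((Rabs (lp + 2) * Kx A B + Kz A B) + (Rabs (lm + 2) * Kx A B + Kz A B)) * (1 + 2 / (lp - lm) ^ 2).

Lemma chetaev_rate_pos : 0 < chetaev_rate.
Proof. apply Rmin_glb_lt; lra. Qed.

Lemma chetaev_const_ge0 : 0 <= chetaev_const.
Proof.
  pose proof (Kx_ge0 A B). pose proof (Kz_ge0 A B).
  pose proof (Rabs_pos (lp + 2)). pose proof (Rabs_pos (lm + 2)).
  assert (0 <= 2 / (lp - lm) ^ 2) by (apply Rdiv_le_0_compat; nra).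
  unfold chetaev_const. apply Rmult_le_pos; nra.
Qed.

Lemma sqr_le_eig_coords x z :
  x ^ 2 <= 2 / (lp - lm) ^ 2 * (eig_coord lp x z ^ 2 + eig_coord lm x z ^ 2).
Proof.
  set (s := lp - lm). set (yp := eig_coord lp x z). set (ym := eig_coord lm x z).
  assert (Hs : 0 < s) by (unfold s; lra).
  assert (Ex : s * x = yp - ym) by (unfold yp, ym, eig_coord, s; ring).
  apply Rmult_le_reg_l with (s ^ 2); [nra|].
  replace (s ^ 2 * (2 / s ^ 2 * (yp ^ 2 + ym ^ 2))) with (2 * (yp ^ 2 + ym ^ 2)) by (field; lra).
  replace (s ^ 2 * x ^ 2) with ((s * x) ^ 2) by ring. rewrite Ex.
  pose proof (pow2_ge_0 (yp + ym)). nra.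
Qed.

Lemma chetaev_dot_ge r w x z : 0 <= r -> r <= 1/8 -> r * chetaev_const <= chetaev_rate ->
  in_box r w x z ->
  chetaev_rate * (eig_coord lp x z ^ 2 + eig_coord lm x z ^ 2) <= chetaev_dot w x z.
Proof.
  intros Hr0 Hr Hrr Hb. pose proof chetaev_const_ge0.
  pose proof Hb as [_ [Hx Hz]]. apply Rabs_le_between in Hx, Hz.
  unfold chetaev_dot. rewrite !eig_coord_dyn by (auto; lra).
  pose proof (eig_rem_bound r A B lp w x z ltac:(lra) Hb) as Pp.
  pose proof (eig_rem_bound r A B lm w x z ltac:(lra) Hb) as Pm.
  set (Pp' := (lp + 2) * rem_x A B w x z + x * rem_z A B w x z) in *.
  set (Pm' := (lm + 2) * rem_x A B w x z + x * rem_z A B w x z) in *.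
  unfold chetaev_const in *.
  set (Kp := Rabs (lp + 2) * Kx A B + Kz A B) in *.
  set (Km := Rabs (lm + 2) * Kx A B + Kz A B) in *.
  set (s := lp - lm) in *. set (mu := chetaev_rate) in *.
  set (yp := eig_coord lp x z). set (ym := eig_coord lm x z).
  pose proof (sqr_le_eig_coords x z) as Sx. fold s yp ym in Sx.
  pose proof (cross_term_ge yp x Pp' (r * Kp) Pp) as C1.
  pose proof (cross_term_ge ym x (- Pm') (r * Km) ltac:(rewrite Rabs_Ropp; auto)) as C2.
  assert (HKp : 0 <= Kp)
    by (unfold Kp; pose proof (Kx_ge0 A B); pose proof (Kz_ge0 A B); pose proof (Rabs_pos (lp + 2)); nra).
  assert (HKm : 0 <= Km)
    by (unfold Km; pose proof (Kx_ge0 A B); pose proof (Kz_ge0 A B); pose proof (Rabs_pos (lm + 2)); nra).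
  set (S := yp ^ 2 + ym ^ 2) in *.
  assert (HS : 0 <= S) by (unfold S; pose proof (pow2_ge_0 yp); pose proof (pow2_ge_0 ym); lra).
  assert (Q1 : r * Kp * (yp ^ 2 + x ^ 2) + r * Km * (ym ^ 2 + x ^ 2)
               <= r * (Kp + Km) * (1 + 2 / s ^ 2) * S).
  { assert (yp ^ 2 + x ^ 2 <= (1 + 2 / s ^ 2) * S) by (unfold S in *; pose proof (pow2_ge_0 ym); lra).
    assert (ym ^ 2 + x ^ 2 <= (1 + 2 / s ^ 2) * S) by (unfold S in *; pose proof (pow2_ge_0 yp); lra).
    assert (0 <= r * Kp) by nra. assert (0 <= r * Km) by nra.
    apply Rle_trans with (r * Kp * ((1 + 2 / s ^ 2) * S) + r * Km * ((1 + 2 / s ^ 2) * S));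
      [apply Rplus_le_compat; apply Rmult_le_compat_l; auto|right; ring]. }
  assert (Q2 : r * (Kp + Km) * (1 + 2 / s ^ 2) * S <= mu * S)
    by (apply Rmult_le_compat_r; auto; rewrite Rmult_assoc; auto).
  assert (L1 : mu * yp ^ 2 <= lp * yp ^ 2)
    by (apply Rmult_le_compat_r; [apply pow2_ge_0|apply Rmin_l]).
  assert (L2 : mu * ym ^ 2 <= - lm * ym ^ 2)
    by (apply Rmult_le_compat_r; [apply pow2_ge_0|apply Rmin_r]).
  unfold S in *.
  replace (2 * yp * (lp * yp + x * Pp') - 2 * ym * (lm * ym + x * Pm')) with
    (2 * lp * yp ^ 2 - 2 * lm * ym ^ 2 + 2 * yp * (x * Pp') + 2 * ym * (x * - Pm')) by ring.
  lra.
Qed.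

Lemma chetaev_le_box r x z : Rabs x <= r -> Rabs z <= r ->
  chetaev x z <= ((Rabs (lp + 2) + 1) * r) ^ 2.
Proof.
  intros Hx Hz. unfold chetaev. pose proof (pow2_ge_0 (eig_coord lm x z)).
  assert (Rabs (eig_coord lp x z) <= (Rabs (lp + 2) + 1) * r).
  { unfold eig_coord. eapply Rle_trans; [apply Rabs_triang|]. rewrite Rabs_mult.
    assert (Rabs (lp + 2) * Rabs x <= Rabs (lp + 2) * r)
      by (apply Rmult_le_compat_l; [apply Rabs_pos|lra]).
    lra. }
  pose proof (sqr_le_of_Rabs_le _ _ H0). lra.
Qed.

Lemma rcont_chetaev (X Z : R -> R) : rcont X 0 -> rcont Z 0 -> rcont (fun t => chetaev (X t) (Z t)) 0.
Proof.
  intros. unfold chetaev, eig_coord.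
  apply rcont_minus; apply rcont_pow; apply rcont_plus; auto; apply rcont_mult; auto; apply rcont_const.
Qed.

Lemma is_derive_chetaev (X Z : R -> R) (t a b : R) : is_derive X t a -> is_derive Z t b ->
  is_derive (fun s => chetaev (X s) (Z s)) t
    (2 * eig_coord lp (X t) (Z t) * ((lp + 2) * a + b) - 2 * eig_coord lm (X t) (Z t) * ((lm + 2) * a + b)).
Proof.
  intros HX HZ. unfold chetaev.
  assert (Hy : forall l, is_derive (fun s => eig_coord l (X s) (Z s)) t ((l + 2) * a + b))
    by (intros l; unfold eig_coord; apply is_derive_plus_R; auto; apply is_derive_scal_R; auto).
  apply is_derive_minus_R;
    [apply (is_derive_sqr_R (fun s => eig_coord lp (X s) (Z s)))
    |apply (is_derive_sqr_R (fun s => eig_coord lm (X s) (Z s)))]; apply Hy.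
Qed.

Variable r : R.
Hypotheses (r_pos : 0 < r) (r_le : r <= 1/8) (r_small : r * chetaev_const <= chetaev_rate).

(* In the box, [chetaev_dot >= chetaev_rate * chetaev >= 0]: first [chetaev] is
   nondecreasing, then its derivative is at least [chetaev_rate * chetaev] at time 0. *)
Lemma chetaev_grows W X Z : rcont X 0 -> rcont Z 0 ->
  (forall t, 0 < t -> is_derive X t (fx d A B (W t) (X t) (Z t)) /\
                      is_derive Z t (fz d A B (W t) (X t) (Z t))) ->
  (forall t, 0 <= t -> nrm3 (W t) (X t) (Z t) < r) ->
  forall t, 0 <= t ->
    chetaev (X 0) (Z 0) + chetaev_rate * chetaev (X 0) (Z 0) * t <= chetaev (X t) (Z t).
Proof.
  intros RX RZ HD Hb.
  pose proof chetaev_rate_pos as Hmu. set (mu := chetaev_rate) in *.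
  set (U := fun t => chetaev (X t) (Z t)).
  set (dU := fun t => chetaev_dot (W t) (X t) (Z t)).
  assert (DU : forall t, 0 < t -> is_derive U t (dU t) /\ mu * U t <= dU t /\ 0 <= dU t).
  { intros t Ht. destruct (HD t Ht) as [DX DZ].
    pose proof (chetaev_dot_ge r (W t) (X t) (Z t) ltac:(lra) r_le r_small
                  (in_box_nrm3 r _ _ _ (Hb t ltac:(lra)))) as Ch.
    pose proof (pow2_ge_0 (eig_coord lm (X t) (Z t))).
    pose proof (pow2_ge_0 (eig_coord lp (X t) (Z t))).
    split; [apply is_derive_chetaev; auto|]. fold mu in Ch. fold (dU t) in Ch.
    unfold U, chetaev. split; [|nra].
    eapply Rle_trans; [|apply Ch]. apply Rmult_le_compat_l; lra. }
  assert (RU : rcont U 0) by (apply rcont_chetaev; auto).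
  assert (Mon : forall t, 0 <= t -> U 0 <= U t).
  { intros t Ht.
    assert (- U t <= - U 0); [|lra].
    apply (le_of_derive_nonpos (fun t => - U t) (fun t => - dU t) 0 p_infty); auto; [| |exact I].
    - apply rcont_ext with (fun t => 0 - U t); [intros; ring|]. apply rcont_minus; auto.
      apply rcont_const.
    - intros v Hv _. destruct (DU v Hv) as [D1 [_ D3]]. split; [|lra].
      apply (is_derive_ext (fun s => -1 * U s)); [intros; simpl; ring|].
      eapply is_derive_eq_val; [apply (is_derive_scal_R (-1) U); exact D1|ring]. }
  intros t Ht.
  assert (U 0 + mu * U 0 * t - U t <= U 0 + mu * U 0 * 0 - U 0); [|unfold U in *; lra].
  apply (le_of_derive_nonpos (fun t => U 0 + mu * U 0 * t - U t) (fun t => mu * U 0 - dU t) 0 p_infty);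
    auto; [| |exact I].
  - apply rcont_minus; auto. apply rcont_plus; [apply rcont_const|].
    apply rcont_mult; [apply rcont_const|apply rcont_id].
  - intros v Hv _. destruct (DU v Hv) as [D1 [D2 _]]. split.
    + apply is_derive_minus_R; auto. apply is_derive_affine.
    + pose proof (Mon v ltac:(lra)). assert (mu * U 0 <= mu * U v) by (apply Rmult_le_compat_l; lra).
      lra.
Qed.

End Chetaev.

Lemma dfe_unstable_of_gap k1 k2 k3 d :
  1 < alpha k1 k2 k3 * d / k1 + beta k1 k2 k3 * d -> dfe_unstable k1 k2 k3 d.
Proof.
  set (A := alpha k1 k2 k3 * d / k1). set (B := beta k1 k2 k3 * d).
  intros Hgap Hst.
  destruct (char_poly_saddle d A B Hgap) as [lp [lm [Hlp [Hlm [Cp Cm]]]]].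
  pose proof (chetaev_rate_pos lp lm Hlp Hlm) as Hmu.
  destruct (exists_small_radius _ _ (chetaev_const_ge0 A B lp lm Hlp Hlm) Hmu) as [r [Hr0 [Hr1 Hr2]]].
  destruct (Hst r Hr0) as [eta [Heta Hst2]].
  (* Start at (0, sg, -(lm + 2) sg), on the line ym = 0 where chetaev is positive. *)
  set (sg := eta / (2 * (1 + Rabs (lm + 2)))).
  pose proof (Rabs_pos (lm + 2)).
  assert (Hsg : 0 < sg) by (apply Rdiv_lt_0_compat; lra).
  assert (Hsg1 : sg * (2 * (1 + Rabs (lm + 2))) = eta) by (unfold sg; field; lra).
  assert (Hn : nrm3 0 sg (- (lm + 2) * sg) < eta).
  { apply nrm3_lt; [rewrite Rabs_R0; lra|rewrite Rabs_pos_eq; nra|].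
    rewrite Rabs_mult, Rabs_Ropp, (Rabs_pos_eq sg) by lra. nra. }
  destruct (Hst2 _ _ _ Hn) as [[W [X [Z [Hsol [I1 [I2 I3]]]]]] Hall].
  assert (Bd : forall t, 0 <= t -> nrm3 (W t) (X t) (Z t) < r)
    by (intros t Ht; apply (Hall p_infty W X Z Hsol I1 I2 I3 t Ht I)).
  destruct Hsol as [_ [_ [_ [RX [RZ HD]]]]].
  pose proof (chetaev_grows d A B lp lm Hlp Hlm Cp Cm r Hr0 Hr1 Hr2 W X Z RX RZ) as Grow.
  assert (U0 : chetaev lp lm (X 0) (Z 0) = ((lp - lm) * sg) ^ 2)
    by (unfold chetaev, eig_coord; rewrite I2, I3; ring).
  assert (HU0 : 0 < chetaev lp lm (X 0) (Z 0)) by (rewrite U0; apply pow_lt; nra).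
  set (Bmax := ((Rabs (lp + 2) + 1) * r) ^ 2).
  set (U0' := chetaev_rate lp lm * chetaev lp lm (X 0) (Z 0)).
  assert (HU0' : 0 < U0') by (unfold U0'; nra).
  assert (HB : 0 <= Bmax) by apply pow2_ge_0.
  set (t1 := Bmax / U0' + 1).
  assert (Ht1 : 0 <= t1) by (unfold t1; pose proof (Rdiv_le_0_compat Bmax U0' HB HU0'); lra).
  assert (U0' * t1 = Bmax + U0') by (unfold t1; field; lra).
  pose proof (Grow ltac:(intros t Ht; destruct (HD t Ht I) as [_ [DX DZ]];
                         rewrite Fx_fx in DX; rewrite Fz_fz in DZ; auto) Bd t1 Ht1) as Low.
  pose proof (Bd t1 Ht1).
  pose proof (chetaev_le_box lp lm r (X t1) (Z t1)
                ltac:(pose proof (nrm3_ge_2 (W t1) (X t1) (Z t1)); lra)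
                ltac:(pose proof (nrm3_ge_3 (W t1) (X t1) (Z t1)); lra)) as High.
  fold U0' in Low. fold Bmax in High. lra.
Qed.

Theorem mainTheorem1 (p : nat -> R) (k1 k2 k3 d : R) :
  degree_moments p k1 k2 k3 ->
  0 < k1 -> 0 < k2 - k1 ^ 2 -> k1 < k2 -> 0 < d ->
  (d < delta_c k1 k2 -> dfe_LAS k1 k2 k3 d) /\
  (delta_c k1 k2 < d -> dfe_unstable k1 k2 k3 d).
Proof.
  (* Only the stated inequalities on the moments are used. *)
  intros _ Hk1 Hk2 Hk12 Hd.
  pose proof (alpha_beta_sub1 k1 k2 k3 d Hk1 Hk2 Hk12) as Hgap.
  assert (Hsign : forall u, 0 < u -> 0 < u * (k2 - k1) / k1)
    by (intros u Hu; apply Rdiv_lt_0_compat; [apply Rmult_lt_0_compat|]; lra).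
  split; intros Hdc.
  - pose proof (Hsign (delta_c k1 k2 - d) ltac:(lra)).
    assert ((delta_c k1 k2 - d) * (k2 - k1) / k1 = - ((d - delta_c k1 k2) * (k2 - k1) / k1))
      by (field; lra).
    split; [apply dfe_stable_of_gap|apply dfe_attractive_of_gap]; auto; lra.
  - pose proof (Hsign (d - delta_c k1 k2) ltac:(lra)).
    apply dfe_unstable_of_gap. lra.
Qed.
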